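(* Let $f$ be a Brouwer-mapping function with complexity parameter $n$ (computed by a Brouwer-mapping circuit). Then $f$ can be implemented by a linear arithmetic circuit having $\mathrm{poly}(n)$ gates that computes a continuous function $K\to K$, where $K=[0,1]^3$.
   Context: For $n\in\mathbb{N}$, $K=[0,1]^3$ is partitioned into $2^{3n}$ cubelets $K_{ijk}$, $0\le i,j,k\le 2^n-1$, where $K_{ijk}$ is the axis-aligned cube of side $2^{-n}$ with vertex closest to the origin $2^{-n}(i,j,k)$. A Brouwer-mapping circuit with parameter $n$ is a Boolean circuit with $3n$ inputs and $2$ outputs; it defines a Brouwer-mapping function $f$ mapping each cubelet to a color in $\{0,1,2,3\}$, with exterior cubelets (some index equal to $0$ or $2^n-1$) colored as follows: color $1$ if $i=0$; color $2$ if $j=0,i>0$; color $3$ if $k=0$, $i,j>0$; color $0$ otherwise. A linear arithmetic circuit is a directed acyclic circuit computing a function $K\to K$ (three input nodes, three output nodes) whose gates each take $0$, $1$ or $2$ inputs in $[0,1]$ and output a value in $[0,1]$: the sum, difference, max or min of two inputs, a constant multiple of one input, or a constant; results are truncated to $[0,1]$ (e.g. a sum exceeding $1$ outputs $1$). Comparator gates are also allowed: output $1$ if the first input exceeds the second, $0$ if it is smaller, and any value if they are equal. Let $\alpha=2^{-2n}$, $\delta_1=(\alpha,0,0)$, $\delta_2=(0,\alpha,0)$, $\delta_3=(0,0,\alpha)$, $\delta_0=(-\alpha,-\alpha,-\alpha)$. A circuit $C$ computing a function $K\to K$ implements $f$ if: whenever $f(K_{ijk})=c$ and $x$ is the center of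 $K_{ijk}$, $C(x)-x=\delta_c$; and for $x$ not a cubelet center, $C(x)-x$ is a convex combination of the vectors $C(z)-z$ over cubelet centers $z$ within $L_\infty$ distance $2^{-n}$ of $x$. *)

From Stdlib Require Import Reals List Lia.
Import ListNotations.
Open Scope R_scope.

(* Gate at position p may only reference gates at positions < p (acyclic). *)
Inductive bgate : Type :=
  | BIn (k : nat)
  | BConst (b : bool)
  | BNot (i : nat)
  | BAnd (i j : nat)
  | BOr (i j : nat).

Record bcircuit : Type := {
  bgates : list bgate;
  bout0 : nat;
  bout1 : nat
}.

Definition bgate_wf (m p : nat) (g : bgate) : Prop :=
  match g with
  | BIn k => (k < m)%nat
  | BConst _ => True
  | BNot i => (i < p)%nat
  | BAnd i j | BOr i j => (i < p)%nat /\ (j < p)%nat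
  end.

Definition bcircuit_wf (m : nat) (B : bcircuit) : Prop :=
  (forall p g, nth_error (bgates B) p = Some g -> bgate_wf m p g) /\
  (bout0 B < length (bgates B))%nat /\ (bout1 B < length (bgates B))%nat.

Definition bgate_val (inp : nat -> bool) (acc : list bool) (g : bgate) : bool :=
  match g with
  | BIn k => inp k
  | BConst b => b
  | BNot i => negb (nth i acc false)
  | BAnd i j => andb (nth i acc false) (nth j acc false)
  | BOr i j => orb (nth i acc false) (nth j acc false)
  end.

Fixpoint beval_aux (inp : nat -> bool) (gs : list bgate) (acc : list bool)
  : list bool :=
  match gs with
  | [] => acc
  | g :: gs' => beval_aux inp gs' (acc ++ [bgate_val inp acc g])
  end.

(* Input encoding of the cubelet index (i,j,k): inputs 0..n-1 are the bits
   of i (least significant first), n..2n-1 those of j, 2n..3n-1 those of k. *)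
Definition cube_input (n i j k : nat) (t : nat) : bool :=
  if (t <? n)%nat then Nat.testbit i t
  else if (t <? 2 * n)%nat then Nat.testbit j (t - n)
  else Nat.testbit k (t - 2 * n).

Definition bcolor (B : bcircuit) (n i j k : nat) : nat :=
  let v := beval_aux (cube_input n i j k) (bgates B) [] in
  (2 * Nat.b2n (nth (bout0 B) v false) + Nat.b2n (nth (bout1 B) v false))%nat.

Definition brouwer_f (B : bcircuit) (n i j k : nat) : nat :=
  let M := (2 ^ n - 1)%nat in
  if (i =? 0)%nat then 1%nat
  else if (j =? 0)%nat then 2%nat
  else if (k =? 0)%nat then 3%nat
  else if orb (orb (i =? M)%nat (j =? M)%nat) (k =? M)%nat then 0%nat
  else bcolor B n i j k.

Definition pt : Type := (R * R * R)%type.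
Definition cx (x : pt) : R := fst (fst x).
Definition cy (x : pt) : R := snd (fst x).
Definition cz (x : pt) : R := snd x.
Definition coord (x : pt) (d : nat) : R :=
  match d with 0%nat => cx x | 1%nat => cy x | _ => cz x end.

Definition vadd (x y : pt) : pt := (cx x + cx y, cy x + cy y, cz x + cz y).
Definition vsub (x y : pt) : pt := (cx x - cx y, cy x - cy y, cz x - cz y).
Definition vscale (a : R) (x : pt) : pt := (a * cx x, a * cy x, a * cz x).
Definition vzero : pt := (0, 0, 0).

Definition dist_inf (x y : pt) : R :=
  Rmax (Rabs (cx x - cx y)) (Rmax (Rabs (cy x - cy y)) (Rabs (cz x - cz y))).

Definition inK (x : pt) : Prop :=
  0 <= cx x <= 1 /\ 0 <= cy x <= 1 /\ 0 <= cz x <= 1.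

Definition continuous_on_K (F : pt -> pt) : Prop :=
  forall x, inK x -> forall eps, 0 < eps ->
    exists delta, 0 < delta /\
      forall y, inK y -> dist_inf y x < delta -> dist_inf (F y) (F x) < eps.

Definition center (n i j k : nat) : pt :=
  ((INR i + / 2) / 2 ^ n, (INR j + / 2) / 2 ^ n, (INR k + / 2) / 2 ^ n).

Definition is_center (n : nat) (z : pt) : Prop :=
  exists i j k, (i < 2 ^ n)%nat /\ (j < 2 ^ n)%nat /\ (k < 2 ^ n)%nat /\
    z = center n i j k.

Definition alpha (n : nat) : R := / 2 ^ (2 * n).

Definition delta_col (n : nat) (c : nat) : pt :=
  match c with
  | 1%nat => (alpha n, 0, 0)
  | 2%nat => (0, alpha n, 0)
  | 3%nat => (0, 0, alpha n)
  | _ => (- alpha n, - alpha n, - alpha n)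
  end.

Definition implements (B : bcircuit) (n : nat) (F : pt -> pt) : Prop :=
  (forall i j k, (i < 2 ^ n)%nat -> (j < 2 ^ n)%nat -> (k < 2 ^ n)%nat ->
     vsub (F (center n i j k)) (center n i j k) = delta_col n (brouwer_f B n i j k)) /\
  (forall x, inK x -> ~ is_center n x ->
     exists l : list (R * pt),
       (forall w z, In (w, z) l ->
          0 <= w /\ is_center n z /\ dist_inf z x <= / 2 ^ n) /\
       fold_right (fun wz s => fst wz + s) 0 l = 1 /\
       vsub (F x) x =
         fold_right (fun wz s => vadd (vscale (fst wz) (vsub (F (snd wz)) (snd wz))) s)
                    vzero l).

Inductive lgate : Type :=
  | LIn (d : nat)
  | LConst (c : R)
  | LAdd (i j : nat)
  | LSub (i j : nat)
  | LMax (i j : nat)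
  | LMin (i j : nat)
  | LScale (c : R) (i : nat)
  | LCmp (i j : nat).

Record lcircuit : Type := {
  lgates : list lgate;
  lout0 : nat; lout1 : nat; lout2 : nat
}.

Definition lgate_wf (p : nat) (g : lgate) : Prop :=
  match g with
  | LIn d => (d < 3)%nat
  | LConst _ => True
  | LAdd i j | LSub i j | LMax i j | LMin i j | LCmp i j =>
      (i < p)%nat /\ (j < p)%nat
  | LScale _ i => (i < p)%nat
  end.

Definition lcircuit_wf (C : lcircuit) : Prop :=
  (forall p g, nth_error (lgates C) p = Some g -> lgate_wf p g) /\
  (lout0 C < length (lgates C))%nat /\ (lout1 C < length (lgates C))%nat /\
  (lout2 C < length (lgates C))%nat.

Definition trunc01 (x : R) : R := Rmax 0 (Rmin 1 x).

Definition lgate_ok (x : pt) (vals : list R) (g : lgate) (v : R) : Prop :=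
  let val i := nth i vals 0 in
  match g with
  | LIn d => v = coord x d
  | LConst c => v = trunc01 c
  | LAdd i j => v = trunc01 (val i + val j)
  | LSub i j => v = trunc01 (val i - val j)
  | LMax i j => v = trunc01 (Rmax (val i) (val j))
  | LMin i j => v = trunc01 (Rmin (val i) (val j))
  | LScale c i => v = trunc01 (c * val i)
  | LCmp i j => (val i > val j -> v = 1) /\ (val i < val j -> v = 0) /\ 0 <= v <= 1
  end.

(* vals is a valid (possibly nondeterministic at comparators) evaluation *)
Definition lvalid (C : lcircuit) (x : pt) (vals : list R) : Prop :=
  length vals = length (lgates C) /\
  forall p g, nth_error (lgates C) p = Some g -> lgate_ok x vals g (nth p vals 0).

Definition loutput (C : lcircuit) (vals : list R) : pt :=
  (nth (lout0 C) vals 0, nth (lout1 C) vals 0, nth (lout2 C) vals 0).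

Definition lcomputes (C : lcircuit) (F : pt -> pt) : Prop :=
  forall x, inK x ->
    (exists vals, lvalid C x vals) /\
    (forall vals, lvalid C x vals -> loutput C vals = F x).

From Stdlib Require Import Reals List Lia Lra Psatz Bool.
Import ListNotations.
Open Scope R_scope.

(* Each coordinate [u] of [x] is probed at [u -/+ 2^-n/4], and a weight
   [lambda(u)] in [[0, 1]], computed with [n + 2] iterations of the tent map,
   is 1 unless the lower probe lies at least 1/8 of a cell inside a cubelet,
   and 0 unless the upper one does.  For a probe that deep inside, gates with
   constant multipliers of order [2^n] recover the flags and the binary index
   of its cubelet exactly, so the Boolean circuit can be simulated with
   [min], [max] and [1 - x] on {0, 1}.  The eight corners of the box of probes
   get weights, the lengths of intersections of the intervals [[0, 1 - lambda]]
   and [[1 - lambda, 1]], which sum to 1 and vanish at corners whose probes are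
   not deep inside, and the output is [x] plus the weighted sum of the colour
   displacements [delta_c].  The boundary colouring keeps this sum inside [K],
   so no gate truncates, and without comparators the circuit is Lipschitz. *)

(** * Comparator-free linear circuits *)

(* Comparator gates are never used by the circuits built below; [gate_eval]
   gives them the junk value 0. *)
Definition gate_eval (x : pt) (look : nat -> R) (g : lgate) : R :=
  match g with
  | LIn d => coord x d
  | LConst c => trunc01 c
  | LAdd i j => trunc01 (look i + look j)
  | LSub i j => trunc01 (look i - look j)
  | LMax i j => trunc01 (Rmax (look i) (look j))
  | LMin i j => trunc01 (Rmin (look i) (look j))
  | LScale c i => trunc01 (c * look i)
  | LCmp _ _ => 0
  end.

Fixpoint eval_gates (x : pt) (gs : list lgate) (acc : list R) : list R :=
  match gs with
  | [] => acc
  | g :: gs' => eval_gates x gs' (acc ++ [gate_eval x (fun i => nth i acc 0) g])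
  end.

Definition gval (gs : list lgate) (x : pt) (p : nat) : R := nth p (eval_gates x gs []) 0.

Lemma eval_gates_app x gs t acc :
  eval_gates x (gs ++ t) acc = eval_gates x t (eval_gates x gs acc).
Proof. revert acc; induction gs; simpl; auto. Qed.

Lemma eval_gates_length x gs acc :
  length (eval_gates x gs acc) = (length acc + length gs)%nat.
Proof.
  revert acc; induction gs; intros; simpl; [lia|].
  rewrite IHgs, length_app; simpl; lia.
Qed.

Lemma eval_gates_prefix x gs acc : exists l, eval_gates x gs acc = acc ++ l.
Proof.
  revert acc; induction gs as [|g gs IH]; intros; simpl.
  - exists []; now rewrite app_nil_r.
  - destruct (IH (acc ++ [gate_eval x (fun i => nth i acc 0) g])) as [l ->].
    exists (gate_eval x (fun i => nth i acc 0) g :: l). now rewrite <- app_assoc.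
Qed.

Lemma gval_app_l gs t x p : (p < length gs)%nat -> gval (gs ++ t) x p = gval gs x p.
Proof.
  intros Hp. unfold gval. rewrite eval_gates_app.
  destruct (eval_gates_prefix x t (eval_gates x gs [])) as [l ->].
  rewrite app_nth1; auto. rewrite eval_gates_length. simpl. lia.
Qed.

Lemma gval_snoc gs g x : gval (gs ++ [g]) x (length gs) = gate_eval x (gval gs x) g.
Proof.
  unfold gval. rewrite eval_gates_app. simpl.
  rewrite app_nth2; rewrite eval_gates_length; simpl; try lia.
  now rewrite Nat.sub_diag.
Qed.

Lemma gval_overflow gs x p : (length gs <= p)%nat -> gval gs x p = 0.
Proof. intros. apply nth_overflow. rewrite eval_gates_length. simpl. lia. Qed.

Lemma gval_app_r gs t x k :
  gval (gs ++ t) x (length gs + k) =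
  match nth_error t k with Some g => gate_eval x (gval (gs ++ firstn k t) x) g | None => 0 end.
Proof.
  destruct (nth_error t k) as [g|] eqn:E.
  - apply nth_error_split in E as (l1 & l2 & -> & Hl). subst k.
    rewrite firstn_app, firstn_all, Nat.sub_diag. simpl. rewrite app_nil_r.
    replace (gs ++ l1 ++ g :: l2) with (((gs ++ l1) ++ [g]) ++ l2)
      by (rewrite <- !app_assoc; reflexivity).
    rewrite gval_app_l by (rewrite !length_app; simpl; lia).
    replace (length gs + length l1)%nat with (length (gs ++ l1)) by (rewrite length_app; lia).
    apply gval_snoc.
  - apply gval_overflow. apply nth_error_None in E. rewrite length_app. lia.
Qed.

Lemma gval_app_r0 gs t x :
  gval (gs ++ t) x (length gs) =
  match nth_error t 0 with Some g => gate_eval x (gval gs x) g | None => 0 end.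
Proof.
  pose proof (gval_app_r gs t x 0) as H. rewrite Nat.add_0_r in H. rewrite H.
  simpl. now rewrite app_nil_r.
Qed.

Definition comparator_free (g : lgate) : Prop :=
  match g with LCmp _ _ => False | _ => True end.

Definition wf_gates (gs : list lgate) : Prop :=
  forall p g, nth_error gs p = Some g -> lgate_wf p g /\ comparator_free g.

Lemma wf_gates_app gs t : wf_gates gs ->
  (forall j g, nth_error t j = Some g -> lgate_wf (length gs + j) g /\ comparator_free g) ->
  wf_gates (gs ++ t).
Proof.
  intros Hg Ht p g Hp. destruct (Nat.lt_ge_cases p (length gs)).
  - rewrite nth_error_app1 in Hp by auto. now apply Hg.
  - rewrite nth_error_app2 in Hp by auto.
    replace p with (length gs + (p - length gs))%nat by lia. now apply Ht.
Qed.

Lemma trunc01_range a : 0 <= trunc01 a <= 1.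
Proof. unfold trunc01, Rmax, Rmin. repeat destruct Rle_dec; lra. Qed.

Lemma trunc01_id a : 0 <= a <= 1 -> trunc01 a = a.
Proof. intros. unfold trunc01, Rmax, Rmin. repeat destruct Rle_dec; lra. Qed.

Lemma trunc01_le0 a : a <= 0 -> trunc01 a = 0.
Proof. intros. unfold trunc01, Rmax, Rmin. repeat destruct Rle_dec; lra. Qed.

Lemma trunc01_ge1 a : 1 <= a -> trunc01 a = 1.
Proof. intros. unfold trunc01, Rmax, Rmin. repeat destruct Rle_dec; lra. Qed.

Lemma coord_range x d : inK x -> 0 <= coord x d <= 1.
Proof. intros (? & ? & ?). destruct d as [|[|]]; simpl; auto. Qed.

Lemma gate_eval_range x f g : inK x -> 0 <= gate_eval x f g <= 1.
Proof.
  intros. destruct g; simpl; try apply trunc01_range; try lra. now apply coord_range.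
Qed.

Lemma gval_range gs x p : inK x -> 0 <= gval gs x p <= 1.
Proof.
  intros HK. unfold gval.
  assert (Hgen : forall acc, (forall q, 0 <= nth q acc 0 <= 1) ->
            forall q, 0 <= nth q (eval_gates x gs acc) 0 <= 1).
  { induction gs as [|g gs IH]; intros acc Hacc q; simpl; auto.
    apply IH. intros q'. destruct (Nat.lt_ge_cases q' (length acc)).
    - rewrite app_nth1; auto.
    - rewrite app_nth2 by lia.
      destruct (q' - length acc)%nat as [|[|]]; simpl; try lra. now apply gate_eval_range. }
  apply Hgen. intros [|]; simpl; lra.
Qed.

Lemma gate_eval_local x f f' p g : lgate_wf p g -> (forall i, (i < p)%nat -> f i = f' i) ->
  gate_eval x f g = gate_eval x f' g.
Proof.
  intros Hw Hf. destruct g; simpl in *; try reflexivity;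
    try (destruct Hw; rewrite !Hf by auto; reflexivity); rewrite Hf by auto; reflexivity.
Qed.

Lemma gval_nth gs p g x : nth_error gs p = Some g -> lgate_wf p g ->
  gval gs x p = gate_eval x (gval gs x) g.
Proof.
  intros Hg Hw. apply nth_error_split in Hg as (l1 & l2 & -> & Hl). subst p.
  replace (l1 ++ g :: l2) with ((l1 ++ [g]) ++ l2) by (rewrite <- app_assoc; reflexivity).
  rewrite gval_app_l by (rewrite length_app; simpl; lia). rewrite gval_snoc.
  apply gate_eval_local with (length l1); auto. intros.
  rewrite !gval_app_l; auto. rewrite length_app; simpl; lia.
Qed.

Definition mk_lcircuit (gs : list lgate) (o0 o1 o2 : nat) : lcircuit :=
  {| lgates := gs; lout0 := o0; lout1 := o1; lout2 := o2 |}.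

Lemma eval_gates_lvalid gs o0 o1 o2 x : wf_gates gs ->
  lvalid (mk_lcircuit gs o0 o1 o2) x (eval_gates x gs []).
Proof.
  intros Hw. split.
  - rewrite eval_gates_length. reflexivity.
  - simpl. intros p g Hg. destruct (Hw p g Hg) as [Hwf Hn].
    change (nth p (eval_gates x gs []) 0) with (gval gs x p).
    rewrite (gval_nth gs p g x Hg Hwf). destruct g; simpl in *; try tauto; reflexivity.
Qed.

Lemma lvalid_unique gs o0 o1 o2 x vals : wf_gates gs -> lvalid (mk_lcircuit gs o0 o1 o2) x vals ->
  forall p, (p < length gs)%nat -> nth p vals 0 = gval gs x p.
Proof.
  intros Hw [Hl Hv] p. simpl in *.
  induction p as [p IH] using (well_founded_induction Wf_nat.lt_wf). intros Hp.
  destruct (nth_error gs p) as [g|] eqn:E.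
  2:{ apply nth_error_None in E. lia. }
  destruct (Hw p g E) as [Hwf Hn]. pose proof (Hv p g E) as Hok.
  rewrite (gval_nth gs p g x E Hwf).
  assert (Hd : forall i, (i < p)%nat -> nth i vals 0 = gval gs x i) by (intros; apply IH; lia).
  destruct g; simpl in *; try tauto; rewrite Hok; try reflexivity;
    try (destruct Hwf; rewrite !Hd by auto; reflexivity); rewrite Hd by auto; reflexivity.
Qed.

Lemma trunc01_lip a b : Rabs (trunc01 a - trunc01 b) <= Rabs (a - b).
Proof.
  unfold trunc01, Rmax, Rmin, Rabs.
  repeat destruct Rle_dec; repeat destruct Rcase_abs; lra.
Qed.

Lemma Rmax_lip a b c d : Rabs (Rmax a b - Rmax c d) <= Rabs (a - c) + Rabs (b - d).
Proof. unfold Rmax, Rabs. repeat destruct Rle_dec; repeat destruct Rcase_abs; lra. Qed.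

Lemma Rmin_lip a b c d : Rabs (Rmin a b - Rmin c d) <= Rabs (a - c) + Rabs (b - d).
Proof. unfold Rmin, Rabs. repeat destruct Rle_dec; repeat destruct Rcase_abs; lra. Qed.

Lemma coord_lip x y d : Rabs (coord x d - coord y d) <= dist_inf x y.
Proof.
  unfold dist_inf.
  pose proof (Rmax_l (Rabs (cx x - cx y)) (Rmax (Rabs (cy x - cy y)) (Rabs (cz x - cz y)))).
  pose proof (Rmax_r (Rabs (cx x - cx y)) (Rmax (Rabs (cy x - cy y)) (Rabs (cz x - cz y)))).
  pose proof (Rmax_l (Rabs (cy x - cy y)) (Rabs (cz x - cz y))).
  pose proof (Rmax_r (Rabs (cy x - cy y)) (Rabs (cz x - cz y))).
  destruct d as [|[|]]; simpl; lra.
Qed.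

Lemma dist_inf_ge0 x y : 0 <= dist_inf x y.
Proof. unfold dist_inf. apply Rle_trans with (2 := Rmax_l _ _). apply Rabs_pos. Qed.

Definition scale_factor (g : lgate) : R := match g with LScale c _ => Rabs c | _ => 0 end.

Lemma scale_factor_ge0 g : 0 <= scale_factor g.
Proof. destruct g; simpl; try lra. apply Rabs_pos. Qed.

Lemma gate_eval_lip x y L f f' g :
  0 <= L ->
  (forall i, Rabs (f i - f' i) <= L * dist_inf x y) ->
  Rabs (gate_eval x f g - gate_eval y f' g) <= (L * (2 + scale_factor g) + 1) * dist_inf x y.
Proof.
  intros HL Hf. pose proof (dist_inf_ge0 x y) as Hd. pose proof (scale_factor_ge0 g).
  destruct g; simpl in *; try (eapply Rle_trans; [apply trunc01_lip|]).
  - pose proof (coord_lip x y d). nra.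
  - rewrite Rminus_diag, Rabs_R0. nra.
  - pose proof (Hf i); pose proof (Hf j).
    replace (f i + f j - (f' i + f' j)) with ((f i - f' i) + (f j - f' j)) by ring.
    eapply Rle_trans; [apply Rabs_triang|]. nra.
  - pose proof (Hf i); pose proof (Hf j).
    replace (f i - f j - (f' i - f' j)) with ((f i - f' i) + - (f j - f' j)) by ring.
    eapply Rle_trans; [apply Rabs_triang|]. rewrite Rabs_Ropp. nra.
  - pose proof (Hf i); pose proof (Hf j). eapply Rle_trans; [apply Rmax_lip|]. nra.
  - pose proof (Hf i); pose proof (Hf j). eapply Rle_trans; [apply Rmin_lip|]. nra.
  - pose proof (Hf i). rewrite <- Rmult_minus_distr_l, Rabs_mult. nra.
  - rewrite Rminus_diag, Rabs_R0. nra.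
Qed.

Lemma gval_lipschitz gs : exists L, 0 <= L /\ forall x y p,
  Rabs (gval gs x p - gval gs y p) <= L * dist_inf x y.
Proof.
  induction gs as [|g gs IH] using rev_ind.
  - exists 0. split; [lra|]. intros.
    rewrite !gval_overflow by (simpl; lia). rewrite Rminus_0_r, Rabs_R0.
    pose proof (dist_inf_ge0 x y). nra.
  - destruct IH as [L [HL IH]]. pose proof (scale_factor_ge0 g).
    exists (L * (2 + scale_factor g) + 1). split; [nra|].
    intros x y p. pose proof (dist_inf_ge0 x y).
    destruct (Nat.lt_total p (length gs)) as [Hlt|[->|Hgt]].
    + rewrite !gval_app_l by auto. eapply Rle_trans; [apply IH|].
      apply Rmult_le_compat_r; nra.
    + rewrite !gval_snoc. now apply gate_eval_lip.
    + rewrite !gval_overflow by (rewrite length_app; simpl; lia).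
      rewrite Rminus_diag, Rabs_R0. apply Rmult_le_pos; nra.
Qed.

Definition circuit_fun (gs : list lgate) (o0 o1 o2 : nat) (x : pt) : pt :=
  (gval gs x o0, gval gs x o1, gval gs x o2).

Lemma lipschitz_continuous_on_K (F : pt -> pt) L : 0 <= L ->
  (forall x y, dist_inf (F x) (F y) <= L * dist_inf x y) -> continuous_on_K F.
Proof.
  intros HL Hlip x Hx eps Heps. exists (eps / (L + 1)). split.
  - apply Rdiv_lt_0_compat; lra.
  - intros y Hy Hd. pose proof (dist_inf_ge0 y x).
    eapply Rle_lt_trans; [apply Hlip|].
    apply Rle_lt_trans with ((L + 1) * dist_inf y x); [nra|].
    apply Rmult_lt_reg_r with (/ (L + 1)); [apply Rinv_0_lt_compat; lra|].
    replace ((L + 1) * dist_inf y x * / (L + 1)) with (dist_inf y x) by (field; lra).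
    exact Hd.
Qed.

Lemma circuit_fun_props gs o0 o1 o2 : wf_gates gs ->
  (o0 < length gs)%nat -> (o1 < length gs)%nat -> (o2 < length gs)%nat ->
  lcircuit_wf (mk_lcircuit gs o0 o1 o2) /\
  (forall x, inK x -> inK (circuit_fun gs o0 o1 o2 x)) /\
  continuous_on_K (circuit_fun gs o0 o1 o2) /\
  lcomputes (mk_lcircuit gs o0 o1 o2) (circuit_fun gs o0 o1 o2).
Proof.
  intros Hw H0 H1 H2. split; [|split; [|split]].
  - split; simpl; auto. intros p g Hg. apply (Hw p g Hg).
  - intros x Hx. unfold inK, circuit_fun, cx, cy, cz; simpl.
    repeat split; apply gval_range; auto.
  - destruct (gval_lipschitz gs) as [L [HL Hlip]].
    apply lipschitz_continuous_on_K with L; auto. intros x y.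
    unfold dist_inf at 1, circuit_fun, cx, cy, cz; simpl.
    pose proof (Hlip x y o0); pose proof (Hlip x y o1); pose proof (Hlip x y o2).
    unfold Rmax. repeat destruct Rle_dec; lra.
  - intros x Hx. split.
    + exists (eval_gates x gs []). now apply eval_gates_lvalid.
    + intros vals Hv. unfold loutput, circuit_fun; simpl.
      rewrite !(lvalid_unique gs o0 o1 o2 x vals Hw Hv); auto.
Qed.

(** * Dyadic arithmetic, probes and corner weights *)

Ltac simpl_minmax :=
  repeat match goal with
  | |- context [Rmax ?a ?b] =>
      first [rewrite (Rmax_left a b) by lra | rewrite (Rmax_right a b) by lra]
  | |- context [Rmin ?a ?b] =>
      first [rewrite (Rmin_left a b) by lra | rewrite (Rmin_right a b) by lra]
  end.

Lemma pow2_pos k : 0 < 2 ^ k.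
Proof. apply pow_lt. lra. Qed.

Lemma pow2_ge2 n : (1 <= n)%nat -> 2 <= 2 ^ n.
Proof. intros. replace 2 with (2 ^ 1) at 1 by ring. apply Rle_pow; [lra|lia]. Qed.

Lemma INR_pow2 k : INR (2 ^ k) = 2 ^ k.
Proof. now rewrite pow_INR. Qed.

Lemma pow2_sub1_pos n : (1 <= n)%nat -> (1 <= 2 ^ n - 1)%nat.
Proof. intros. assert (2 ^ 1 <= 2 ^ n)%nat by (apply Nat.pow_le_mono_r; lia). simpl in *. lia. Qed.

Lemma INR_lt_pow2 c k : (c < 2 ^ k)%nat -> INR c + 1 <= 2 ^ k.
Proof. intros. rewrite <- INR_pow2, <- S_INR. apply le_INR. lia. Qed.

Lemma INR_pow2_sub1 n : INR (2 ^ n - 1) = 2 ^ n - 1.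
Proof. rewrite minus_INR, INR_pow2; [reflexivity|]. pose proof (Nat.pow_nonzero 2 n). lia. Qed.

Lemma inv_pow2_le j n : (j <= n)%nat -> / 2 ^ n <= / 2 ^ j.
Proof. intros. apply Rinv_le_contravar. apply pow2_pos. apply Rle_pow; auto; lra. Qed.

Definition clamp (lo hi x : R) : R := Rmax lo (Rmin hi x).

Lemma clamp_gates lo hi s : 0 <= lo <= hi -> hi <= 1 ->
  trunc01 (Rmax (trunc01 (Rmin (trunc01 s) hi)) lo) = clamp lo hi s.
Proof.
  intros. unfold trunc01, clamp.
  destruct (Rle_dec s 0); [|destruct (Rle_dec s lo); [|destruct (Rle_dec s hi);
    [|destruct (Rle_dec s 1)]]]; simpl_minmax; lra.
Qed.

Lemma div_le_mono X Y N : 0 < N -> X <= Y -> X / N <= Y / N.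
Proof. intros. unfold Rdiv. apply Rmult_le_compat_r; auto. left; now apply Rinv_0_lt_compat. Qed.

Lemma Rmin_div X Y N : 0 < N -> Rmin (X / N) (Y / N) = Rmin X Y / N.
Proof.
  intros. unfold Rmin at 2. destruct Rle_dec.
  - now apply Rmin_left, div_le_mono.
  - apply Rmin_right, div_le_mono; auto; lra.
Qed.

Lemma Rmax_div X Y N : 0 < N -> Rmax (X / N) (Y / N) = Rmax X Y / N.
Proof.
  intros. unfold Rmax at 2. destruct Rle_dec.
  - now apply Rmax_right, div_le_mono.
  - apply Rmax_left, div_le_mono; auto; lra.
Qed.

Lemma clamp_div lo hi s N : 0 < N -> clamp (lo / N) (hi / N) (s / N) = clamp lo hi s / N.
Proof. intros. unfold clamp. now rewrite Rmin_div, Rmax_div. Qed.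

Lemma dyadic_decomposition k v : 0 <= v <= 1 ->
  exists m r, (m < 2 ^ k)%nat /\ 0 <= r <= 1 /\ v = (INR m + r) / 2 ^ k.
Proof.
  revert v; induction k; intros v Hv.
  - exists 0%nat, v. simpl. repeat split; try lra; try lia; try field.
  - destruct (IHk v Hv) as (m & r & Hm & Hr & ->). pose proof (pow2_pos k).
    destruct (Rle_dec r (/2)).
    + exists (2 * m)%nat, (2 * r). repeat split; try lra.
      * rewrite Nat.pow_succ_r'. lia.
      * rewrite mult_INR. simpl. field. lra.
    + exists (2 * m + 1)%nat, (2 * r - 1). repeat split; try lra.
      * rewrite Nat.pow_succ_r'. lia.
      * rewrite plus_INR, mult_INR. simpl. field. lra.
Qed.

Definition tent (v : R) : R := Rmin (2 * v) (2 - 2 * v).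

Lemma tent_iter_dyadic k m r : (m < 2 ^ k)%nat -> 0 <= r <= 1 ->
  Nat.iter k tent ((INR m + r) / 2 ^ k) = if Nat.even m then r else 1 - r.
Proof.
  revert m r; induction k; intros m r Hm Hr.
  - simpl in Hm. replace m with 0%nat by lia. simpl. field.
  - rewrite Nat.iter_succ_r. pose proof (pow2_pos k) as HK.
    assert (Htent : forall a, a <= 2 ^ k ->
              tent (a / 2 ^ S k) = a / 2 ^ k /\ tent ((2 * 2 ^ k - a) / 2 ^ S k) = a / 2 ^ k).
    { intros a Ha. unfold tent. simpl pow.
      assert (Hq : a / 2 ^ k <= 1)
        by (replace 1 with (2 ^ k / 2 ^ k) by (field; lra); now apply div_le_mono).
      replace (2 * (a / (2 * 2 ^ k))) with (a / 2 ^ k) by (field; lra).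
      replace (2 * ((2 * 2 ^ k - a) / (2 * 2 ^ k))) with (2 - a / 2 ^ k) by (field; lra).
      split; [rewrite Rmin_left by lra|rewrite Rmin_right by lra]; field; lra. }
    destruct (Nat.lt_ge_cases m (2 ^ k)).
    + pose proof (INR_lt_pow2 m k H) as Hm1.
      rewrite (proj1 (Htent (INR m + r) ltac:(lra))).
      now apply IHk.
    + rewrite Nat.pow_succ_r' in Hm.
      set (m' := (2 * 2 ^ k - m - 1)%nat).
      assert (Hm' : (m' < 2 ^ k)%nat) by (unfold m'; lia).
      assert (Hmr : INR m' = 2 * 2 ^ k - INR m - 1).
      { unfold m'. rewrite !minus_INR, mult_INR, INR_pow2 by lia. simpl. lra. }
      pose proof (INR_lt_pow2 m' k Hm').
      replace (INR m + r) with (2 * 2 ^ k - (INR m' + (1 - r))) by lra.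
      rewrite (proj2 (Htent (INR m' + (1 - r)) ltac:(lra))).
      rewrite IHk by (auto; lra).
      assert (He : Nat.even m' = negb (Nat.even m)).
      { assert (Hs : (m' + m + 1 = 2 * 2 ^ k)%nat) by (unfold m'; lia).
        assert (Hev : Nat.even (m' + m + 1) = true) by (rewrite Hs; apply Nat.even_mul).
        rewrite !Nat.even_add in Hev. simpl in Hev.
        destruct (Nat.even m'), (Nat.even m); simpl in *; congruence. }
      rewrite He. destruct (Nat.even m); simpl; lra.
Qed.

Definition b2R (b : bool) : R := if b then 1 else 0.

Lemma b2R_range b : 0 <= b2R b <= 1.
Proof. destruct b; simpl; lra. Qed.

Lemma nat_split_top j c : (c < 2 ^ S j)%nat ->
  INR c = b2R (Nat.testbit c j) * 2 ^ j + INR (c mod 2 ^ j).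
Proof.
  intros Hc. pose proof (Nat.pow_nonzero 2 j ltac:(lia)) as Hnz.
  assert (Hq : (c / 2 ^ j < 2)%nat) by (apply Nat.Div0.div_lt_upper_bound; rewrite Nat.pow_succ_r' in Hc; lia).
  assert (Hb : Nat.b2n (Nat.testbit c j) = (c / 2 ^ j)%nat)
    by (rewrite Nat.testbit_spec'; apply Nat.mod_small; auto).
  rewrite (Nat.div_mod c (2 ^ j)) at 1 by auto.
  rewrite plus_INR, mult_INR, INR_pow2, <- Hb.
  destruct (Nat.testbit c j); simpl; ring.
Qed.

(* One step of bit extraction: with [w = (b K + t + rho) / 2K], the gate
   [4/H * (w - (1/2 - H/8))] is 0 or at least 1 according to the bit [b],
   because [w] stays [1/16K >= H/8] away from [1/2]; then [2 (w - b/2)]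
   removes that bit. *)
Lemma bit_step H K t rho (b : bool) :
  0 < H -> H * (2 * K) <= 1 -> 0 <= t -> t + 1 <= K -> 1/8 <= rho <= 7/8 ->
  let w := (b2R b * K + t + rho) / (2 * K) in
  trunc01 (4 / H * trunc01 (w - (1/2 - H/8))) = b2R b /\
  trunc01 (2 * trunc01 (w - trunc01 (/2 * b2R b))) = (t + rho) / K.
Proof.
  intros HH HHK Ht HtK Hr w.
  assert (HK : 0 < K) by lra.
  assert (Hw : w * (2 * K) = b2R b * K + t + rho) by (unfold w; field; lra).
  assert (HwK : forall a, a * (2 * K) <= b2R b * K + t + rho -> a <= w)
    by (intros a Ha; apply Rmult_le_reg_r with (2 * K); lra).
  assert (HKw : forall a, b2R b * K + t + rho <= a * (2 * K) -> w <= a)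
    by (intros a Ha; apply Rmult_le_reg_r with (2 * K); lra).
  assert (HtK' : (t + rho) / K * K = t + rho) by (field; lra).
  destruct b; simpl in *.
  - assert (Hlo : 1/2 + H/8 <= w) by (apply HwK; nra).
    assert (Hhi : w <= 1) by (apply HKw; nra).
    rewrite (trunc01_id (w - _)) by lra.
    split.
    + apply trunc01_ge1.
      replace (4 / H * (w - (1 / 2 - H / 8))) with (4 * (w - (1 / 2 - H / 8)) / H) by (field; lra).
      apply Rmult_le_reg_r with H; auto. unfold Rdiv. rewrite Rmult_assoc, Rinv_l; lra.
    + rewrite (trunc01_id (/2 * 1)), (trunc01_id (w - _)), trunc01_id by lra.
      apply Rmult_eq_reg_r with K; lra.
  - assert (Hhi : w <= 1/2 - H/8) by (apply HKw; nra).
    assert (Hlo : 0 <= w) by (apply HwK; lra).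
    rewrite (trunc01_le0 (w - _)) by lra.
    split.
    + rewrite Rmult_0_r. now apply trunc01_le0.
    + rewrite Rmult_0_r, (trunc01_le0 0), Rminus_0_r, (trunc01_id w), trunc01_id by lra.
      apply Rmult_eq_reg_r with K; lra.
Qed.

Definition well_inside (n : nat) (s : R) (c : nat) : Prop :=
  (c < 2 ^ n)%nat /\ exists rho, 1/8 <= rho <= 7/8 /\ s = (INR c + rho) / 2 ^ n.

Definition probe (n : nat) (s : R) : R := clamp (/ 2 ^ n / 2) (1 - / 2 ^ n / 2) s.
Definition probe_lo (n : nat) (u : R) : R := probe n (u - / 2 ^ n / 4).
Definition probe_hi (n : nat) (u : R) : R := probe n (u + / 2 ^ n / 4).

Definition tent_probe (n : nat) (u : R) : R := Nat.iter (n + 2) tent (u / 2 + / 2 ^ n / 8).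
Definition mix_weight (n : nat) (u : R) : R := trunc01 (2 * trunc01 (tent_probe n u - 1/4)).

Lemma probe_scaled n S : probe n (S / 2 ^ n) = clamp (1/2) (2 ^ n - 1/2) S / 2 ^ n.
Proof.
  pose proof (pow2_pos n). unfold probe. rewrite <- clamp_div by auto.
  f_equal; field; lra.
Qed.

Lemma well_inside_clamp n c S : (1 <= n)%nat -> (c < 2 ^ n)%nat ->
  (c = 0%nat \/ INR c + 1/8 <= S) -> (c = (2 ^ n - 1)%nat \/ S <= INR c + 7/8) ->
  well_inside n (clamp (1/2) (2 ^ n - 1/2) S / 2 ^ n) c.
Proof.
  intros Hn Hc Hlo Hhi. split; auto.
  pose proof (pow2_ge2 n Hn). pose proof (INR_lt_pow2 c n Hc). pose proof (pos_INR c).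
  exists (clamp (1/2) (2 ^ n - 1/2) S - INR c). split; [|f_equal; ring].
  assert (Hv : 1/2 <= clamp (1/2) (2 ^ n - 1/2) S <= 2 ^ n - 1/2 /\
               Rmin (2 ^ n - 1/2) S <= clamp (1/2) (2 ^ n - 1/2) S <= Rmax (1/2) S).
  { unfold clamp. destruct (Rle_dec S (1/2)); [|destruct (Rle_dec S (2 ^ n - 1/2))];
      simpl_minmax; lra. }
  destruct Hv as [Hv1 Hv2]. split.
  - destruct Hlo as [->|Hlo]; simpl in *; [lra|].
    assert (INR c + 1/8 <= Rmin (2 ^ n - 1/2) S) by (apply Rmin_glb; lra). lra.
  - destruct Hhi as [->|Hhi]; [rewrite INR_pow2_sub1; lra|].
    assert (Rmax (1/2) S <= INR c + 7/8) by (apply Rmax_lub; lra). lra.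
Qed.

Lemma mix_weight_cases n m r : (m < 2 ^ n)%nat -> 0 <= r <= 1 ->
  (mix_weight n ((INR m + r) / 2 ^ n) < 1 -> r < 1/8 \/ 3/8 < r) /\
  (0 < mix_weight n ((INR m + r) / 2 ^ n) -> r < 5/8 \/ 7/8 < r).
Proof.
  intros Hm Hr. pose proof (pow2_pos n).
  assert (H4 : 2 ^ (n + 2) = 4 * 2 ^ n) by (rewrite pow_add; simpl; ring).
  assert (H4n : (2 ^ (n + 2) = 4 * 2 ^ n)%nat) by (rewrite Nat.pow_add_r; simpl; lia).
  unfold mix_weight, tent_probe.
  destruct (Rle_dec r (1/4)); [|destruct (Rle_dec r (3/4))].
  - replace ((INR m + r) / 2 ^ n / 2 + / 2 ^ n / 8)
      with ((INR (2 * m) + (2 * r + 1/2)) / 2 ^ (n + 2))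
      by (rewrite H4, mult_INR; simpl; field; lra).
    rewrite tent_iter_dyadic by (lia || lra). rewrite Nat.even_mul. simpl.
    unfold trunc01, Rmax, Rmin. split; intros; repeat destruct Rle_dec; lra.
  - replace ((INR m + r) / 2 ^ n / 2 + / 2 ^ n / 8)
      with ((INR (2 * m + 1) + (2 * r - 1/2)) / 2 ^ (n + 2))
      by (rewrite H4, plus_INR, mult_INR; simpl; field; lra).
    rewrite tent_iter_dyadic by (lia || lra). rewrite Nat.even_add, Nat.even_mul. simpl.
    unfold trunc01, Rmax, Rmin. split; intros; repeat destruct Rle_dec; lra.
  - replace ((INR m + r) / 2 ^ n / 2 + / 2 ^ n / 8)
      with ((INR (2 * m + 2) + (2 * r - 3/2)) / 2 ^ (n + 2))
      by (rewrite H4, plus_INR, mult_INR; simpl; field; lra).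
    rewrite tent_iter_dyadic by (lia || lra). rewrite Nat.even_add, Nat.even_mul. simpl.
    unfold trunc01, Rmax, Rmin. split; intros; repeat destruct Rle_dec; lra.
Qed.

Definition cell_lo (m : nat) (r : R) : nat := if Rlt_dec r (1/8) then pred m else m.
Definition cell_hi (n m : nat) (r : R) : nat :=
  if Rlt_dec (7/8) r then Nat.min (S m) (2 ^ n - 1) else m.

Lemma probe_lo_well_inside n m r : (1 <= n)%nat -> (m < 2 ^ n)%nat -> 0 <= r <= 1 ->
  r < 1/8 \/ 3/8 < r -> well_inside n (probe_lo n ((INR m + r) / 2 ^ n)) (cell_lo m r).
Proof.
  intros Hn Hm Hr Hcase. pose proof (pow2_pos n).
  unfold probe_lo. replace ((INR m + r) / 2 ^ n - / 2 ^ n / 4) with ((INR m + r - 1/4) / 2 ^ n)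
    by (field; lra).
  rewrite probe_scaled. unfold cell_lo. destruct (Rlt_dec r (1/8)).
  - destruct m as [|m']; simpl pred.
    + apply well_inside_clamp; auto. right. simpl. lra.
    + rewrite S_INR. apply well_inside_clamp; auto; [lia|right|right]; lra.
  - apply well_inside_clamp; auto; right; lra.
Qed.

Lemma probe_hi_well_inside n m r : (1 <= n)%nat -> (m < 2 ^ n)%nat -> 0 <= r <= 1 ->
  r < 5/8 \/ 7/8 < r -> well_inside n (probe_hi n ((INR m + r) / 2 ^ n)) (cell_hi n m r).
Proof.
  intros Hn Hm Hr Hcase. pose proof (pow2_pos n).
  unfold probe_hi. replace ((INR m + r) / 2 ^ n + / 2 ^ n / 4) with ((INR m + r + 1/4) / 2 ^ n)
    by (field; lra).
  rewrite probe_scaled. unfold cell_hi. destruct (Rlt_dec (7/8) r).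
  - destruct (Nat.lt_ge_cases (S m) (2 ^ n)).
    + rewrite Nat.min_l by lia. apply well_inside_clamp; auto; right; rewrite S_INR; lra.
    + rewrite Nat.min_r by lia. replace (2 ^ n - 1)%nat with m by lia.
      apply well_inside_clamp; auto; [right; lra|left; lia].
  - apply well_inside_clamp; auto; right; lra.
Qed.

Lemma cell_lo_bound n m r : (m < 2 ^ n)%nat -> (cell_lo m r < 2 ^ n)%nat.
Proof. unfold cell_lo. destruct Rlt_dec; lia. Qed.

Lemma cell_hi_bound n m r : (m < 2 ^ n)%nat -> (cell_hi n m r < 2 ^ n)%nat.
Proof. unfold cell_hi. destruct Rlt_dec; lia. Qed.

Lemma cell_lo_near m r : 0 <= r <= 1 -> Rabs (INR (cell_lo m r) + /2 - (INR m + r)) <= 1.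
Proof.
  intros. unfold cell_lo. destruct Rlt_dec.
  - destruct m as [|m']; simpl pred; [|rewrite S_INR]; simpl; unfold Rabs; destruct Rcase_abs; lra.
  - unfold Rabs; destruct Rcase_abs; lra.
Qed.

Lemma cell_hi_near n m r : (m < 2 ^ n)%nat -> 0 <= r <= 1 ->
  Rabs (INR (cell_hi n m r) + /2 - (INR m + r)) <= 1.
Proof.
  intros. unfold cell_hi. destruct Rlt_dec.
  - destruct (Nat.lt_ge_cases (S m) (2 ^ n)).
    + rewrite Nat.min_l, S_INR by lia. unfold Rabs; destruct Rcase_abs; lra.
    + rewrite Nat.min_r by lia. replace (2 ^ n - 1)%nat with m by lia.
      unfold Rabs; destruct Rcase_abs; lra.
  - unfold Rabs; destruct Rcase_abs; lra.
Qed.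

Lemma alpha_eq n : alpha n = / 2 ^ n * / 2 ^ n.
Proof. unfold alpha. rewrite <- Rinv_mult, <- pow_add. do 2 f_equal. lia. Qed.

Lemma cells_near_zero n m r : 0 <= r -> INR m + r < 1/2 ->
  cell_lo m r = 0%nat /\ cell_hi n m r = 0%nat.
Proof.
  intros Hr HU. unfold cell_lo, cell_hi.
  destruct m; [|rewrite S_INR in HU; pose proof (pos_INR m); lra].
  simpl in *. split; destruct Rlt_dec; auto; lra.
Qed.

Lemma cells_near_end n m r : (m < 2 ^ n)%nat -> r <= 1 -> 2 ^ n - 1/2 < INR m + r ->
  cell_lo m r = (2 ^ n - 1)%nat /\ cell_hi n m r = (2 ^ n - 1)%nat.
Proof.
  intros Hm Hr HU. unfold cell_lo, cell_hi.
  assert (Hm' : m = (2 ^ n - 1)%nat).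
  { destruct (Nat.eq_dec m (2 ^ n - 1)); auto. exfalso.
    assert (INR m + 2 <= 2 ^ n)
      by (rewrite <- INR_pow2; replace 2 with (INR 2) at 1 by reflexivity;
          rewrite <- plus_INR; apply le_INR; lia). lra. }
  rewrite Hm', INR_pow2_sub1 in HU.
  split; destruct Rlt_dec; auto; try lra. rewrite Nat.min_r; lia.
Qed.

Lemma cells_at_center n m r i : 0 <= r <= 1 -> INR m + r = INR i + /2 ->
  cell_lo m r = i /\ cell_hi n m r = i.
Proof.
  intros Hr HU. assert (m = i).
  { destruct (Nat.lt_total m i) as [Hlt|[Heq|Hgt]]; auto; exfalso.
    - assert (INR m + 1 <= INR i) by (rewrite <- S_INR; apply le_INR; lia). lra.
    - assert (INR i + 1 <= INR m) by (rewrite <- S_INR; apply le_INR; lia). lra. }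
  subst i. unfold cell_lo, cell_hi. split; destruct Rlt_dec; auto; lra.
Qed.

Definition probe_cells (n : nat) (u : R) (p q : nat) : Prop :=
  (p < 2 ^ n)%nat /\ (q < 2 ^ n)%nat /\
  Rabs ((INR p + /2) / 2 ^ n - u) <= / 2 ^ n /\ Rabs ((INR q + /2) / 2 ^ n - u) <= / 2 ^ n /\
  (u < alpha n -> p = 0%nat /\ q = 0%nat) /\
  (1 - alpha n < u -> p = (2 ^ n - 1)%nat /\ q = (2 ^ n - 1)%nat) /\
  (forall i, u = (INR i + /2) / 2 ^ n -> p = i /\ q = i).

Lemma coordinate_probe_cells n u : (1 <= n)%nat -> 0 <= u <= 1 ->
  exists p q, probe_cells n u p q /\
    (mix_weight n u < 1 -> well_inside n (probe_lo n u) p) /\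
    (0 < mix_weight n u -> well_inside n (probe_hi n u) q).
Proof.
  intros Hn Hu.
  destruct (dyadic_decomposition n u Hu) as (m & r & Hm & Hr & ->).
  destruct (mix_weight_cases n m r Hm Hr) as [Hl1 Hl2].
  pose proof (pow2_pos n) as HN. pose proof (pow2_ge2 n Hn).
  assert (HiN : 0 < / 2 ^ n) by (apply Rinv_0_lt_compat; lra).
  assert (Hinv : / 2 ^ n <= 1/2) by (apply (inv_pow2_le 1 n) in Hn; simpl in Hn; lra).
  assert (Hscale : forall a b, a / 2 ^ n < b / 2 ^ n -> a < b)
    by (intros a b Hab; apply Rmult_lt_reg_r with (/ 2 ^ n); auto).
  assert (Hdist : forall c, Rabs (INR c + /2 - (INR m + r)) <= 1 ->
            Rabs ((INR c + /2) / 2 ^ n - (INR m + r) / 2 ^ n) <= / 2 ^ n).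
  { intros c Hc. replace ((INR c + /2) / 2 ^ n - (INR m + r) / 2 ^ n)
      with ((INR c + /2 - (INR m + r)) * / 2 ^ n) by (field; lra).
    rewrite Rabs_mult, (Rabs_pos_eq (/ 2 ^ n)) by lra.
    rewrite <- (Rmult_1_l (/ 2 ^ n)) at 2. apply Rmult_le_compat_r; lra. }
  exists (cell_lo m r), (cell_hi n m r). split; [|split].
  - split; [now apply cell_lo_bound|]. split; [now apply cell_hi_bound|].
    split; [apply Hdist, cell_lo_near; auto|]. split; [apply Hdist, cell_hi_near; auto|].
    split; [|split].
    + intros Ha. rewrite alpha_eq in Ha. apply cells_near_zero; [lra|].
      enough (INR m + r < / 2 ^ n) by lra.
      apply Hscale. replace (/ 2 ^ n / 2 ^ n) with (/ 2 ^ n * / 2 ^ n) by (field; lra). lra.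
    + intros Ha. rewrite alpha_eq in Ha. apply cells_near_end; auto; [lra|].
      enough (2 ^ n - / 2 ^ n < INR m + r) by lra.
      apply Hscale. replace ((2 ^ n - / 2 ^ n) / 2 ^ n) with (1 - / 2 ^ n * / 2 ^ n)
        by (field; lra). lra.
    + intros i Hi. apply cells_at_center; auto.
      apply Rmult_eq_reg_r with (/ 2 ^ n); [exact Hi|lra].
  - intros; apply probe_lo_well_inside; auto.
  - intros; apply probe_hi_well_inside; auto.
Qed.

(* Corner [b] of coordinate [a] is the interval [[0, a]] if [b = false] and
   [[a, 1]] if [b = true]; the weight of a corner of the cube is the length of
   the intersection of its three intervals.  Each coordinate's two intervals
   tile [[0, 1]], so the eight weights sum to 1. *)
Definition corner_lo (b : bool) (a : R) : R := if b then a else 0.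
Definition corner_hi (b : bool) (a : R) : R := if b then 1 else a.

Definition corner_weight (bx by' bz : bool) (ax ay az : R) : R :=
  Rmax 0 (Rmin (Rmin (corner_hi bx ax) (corner_hi by' ay)) (corner_hi bz az) -
          Rmax (Rmax (corner_lo bx ax) (corner_lo by' ay)) (corner_lo bz az)).

Definition corners : list (bool * bool * bool) :=
  [(false,false,false); (false,false,true); (false,true,false); (false,true,true);
   (true,false,false); (true,false,true); (true,true,false); (true,true,true)].

Lemma corner_weight_sum ax ay az : 0 <= ax <= 1 -> 0 <= ay <= 1 -> 0 <= az <= 1 ->
  fold_right (fun c s => let '(bx, by', bz) := c in corner_weight bx by' bz ax ay az + s)
    0 corners = 1.
Proof.
  intros. unfold corners, corner_weight, corner_lo, corner_hi; simpl.
  destruct (Rle_dec ax ay); destruct (Rle_dec ay az); destruct (Rle_dec ax az);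
    simpl_minmax; lra.
Qed.

Lemma corner_weight_pos bx by' bz ax ay az : 0 < corner_weight bx by' bz ax ay az ->
  corner_lo bx ax < corner_hi bx ax /\ corner_lo by' ay < corner_hi by' ay /\
  corner_lo bz az < corner_hi bz az.
Proof. unfold corner_weight, Rmax, Rmin. repeat destruct Rle_dec; lra. Qed.

Lemma trunc01_b2R b : trunc01 (b2R b) = b2R b.
Proof. destruct b; apply trunc01_id; simpl; lra. Qed.

Lemma trunc01_not_b2R b : trunc01 (1 - b2R b) = b2R (negb b).
Proof. destruct b; simpl; [rewrite Rminus_diag|rewrite Rminus_0_r]; apply trunc01_id; lra. Qed.

Lemma trunc01_min_b2R a b : trunc01 (Rmin (b2R a) (b2R b)) = b2R (a && b).
Proof. destruct a, b; simpl; simpl_minmax; apply trunc01_id; lra. Qed.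

Lemma trunc01_max_b2R a b : trunc01 (Rmax (b2R a) (b2R b)) = b2R (a || b).
Proof. destruct a, b; simpl; simpl_minmax; apply trunc01_id; lra. Qed.

(* The colour of a cubelet from the flags "index is 0" ([z]) and
   "index is 2^n - 1" ([t]) of its coordinates and the two circuit outputs. *)
Definition color_of (zx zy zz tx ty tz o0 o1 : bool) : nat :=
  if zx then 1 else if zy then 2 else if zz then 3 else if (tx || ty || tz) then 0
  else (2 * Nat.b2n o0 + Nat.b2n o1)%nat.

Lemma brouwer_f_color_of B n i j k :
  brouwer_f B n i j k =
  color_of (i =? 0)%nat (j =? 0)%nat (k =? 0)%nat
    (i =? 2 ^ n - 1)%nat (j =? 2 ^ n - 1)%nat (k =? 2 ^ n - 1)%nat
    (nth (bout0 B) (beval_aux (cube_input n i j k) (bgates B) []) false)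
    (nth (bout1 B) (beval_aux (cube_input n i j k) (bgates B) []) false).
Proof. reflexivity. Qed.

Definition tnot (a : R) := trunc01 (1 - a).
Definition tmin (a b : R) := trunc01 (Rmin a b).
Definition tmax (a b : R) := trunc01 (Rmax a b).

(* The indicators of the four colours, as computed by the gates of
   [corner_block]. *)
Definition color_gates (zx zy zz tx ty tz o0 o1 : R) : R * R * R * R :=
  let no0 := tnot o0 in let no1 := tnot o1 in
  let B0 := tmin no0 no1 in let B1 := tmin no0 o1 in
  let B2 := tmin o0 no1 in let B3 := tmin o0 o1 in
  let nzi := tnot zx in let nzj := tnot zy in let nzk := tnot zz in
  let tt := tmax (tmax tx ty) tz in
  let inner := tnot (tmax (tmax (tmax zx zy) zz) tt) in
  let c2 := tmin nzi zy in let c3a := tmin nzi nzj in let c3 := tmin c3a zz in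
  let x0 := tmin (tmin c3a nzk) tt in
  (tmax x0 (tmin inner B0), tmax zx (tmin inner B1), tmax c2 (tmin inner B2),
   tmax c3 (tmin inner B3)).

Lemma color_gates_correct zx zy zz tx ty tz o0 o1 :
  let c := color_of zx zy zz tx ty tz o0 o1 in
  color_gates (b2R zx) (b2R zy) (b2R zz) (b2R tx) (b2R ty) (b2R tz) (b2R o0) (b2R o1) =
  (b2R (c =? 0)%nat, b2R (c =? 1)%nat, b2R (c =? 2)%nat, b2R (c =? 3)%nat).
Proof.
  unfold color_gates, tnot, tmin, tmax.
  repeat (rewrite trunc01_not_b2R || rewrite trunc01_min_b2R || rewrite trunc01_max_b2R).
  destruct zx, zy, zz, tx, ty, tz, o0, o1; reflexivity.
Qed.

Definition prefix (gs gs' : list lgate) : Prop := exists t, gs' = gs ++ t.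

Lemma prefix_refl gs : prefix gs gs.
Proof. exists []. now rewrite app_nil_r. Qed.

Lemma prefix_app gs t : prefix gs (gs ++ t).
Proof. now exists t. Qed.

Lemma prefix_trans g1 g2 g3 : prefix g1 g2 -> prefix g2 g3 -> prefix g1 g3.
Proof. intros [t1 ->] [t2 ->]. exists (t1 ++ t2). now rewrite app_assoc. Qed.

Lemma prefix_length gs gs' : prefix gs gs' -> (length gs <= length gs')%nat.
Proof. intros [t ->]. rewrite length_app. lia. Qed.

Lemma gval_prefix gs gs' x p : prefix gs gs' -> (p < length gs)%nat -> gval gs' x p = gval gs x p.
Proof. intros [t ->] Hp. now apply gval_app_l. Qed.

Ltac solve_wf :=
  let j := fresh "j" in let g := fresh "g" in let Hj := fresh "Hj" in
  intros j g Hj;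
  repeat (destruct j as [|j]; [simpl in Hj; inversion Hj; subst; simpl; split; [lia|exact I]|]);
  simpl in Hj; destruct j; discriminate.

Ltac eval_block :=
  repeat first
    [ rewrite gval_app_r0; simpl nth_error; cbv iota beta; cbn [gate_eval]
    | rewrite gval_app_r; simpl firstn; simpl nth_error; cbv iota beta; cbn [gate_eval]
    | rewrite gval_app_l by (rewrite ?length_app; simpl; lia) ].

Definition cell (n : nat) : R := / 2 ^ n.

Lemma cell_bounds n : (1 <= n)%nat -> 0 < cell n <= 1/2.
Proof.
  intros. unfold cell. split; [apply Rinv_0_lt_compat, pow2_pos|].
  replace (1/2) with (/ 2 ^ 1) by (simpl; field). now apply inv_pow2_le.
Qed.

(* Every circuit below starts with these ten constant gates. *)
Definition const_gates (n : nat) : list lgate :=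
  [LConst 1; LConst 0; LConst (1/4); LConst (cell n / 8); LConst (cell n / 4);
   LConst (1 - cell n / 2); LConst (cell n / 2); LConst (1/2 - cell n / 8); LConst (cell n);
   LConst (1 - cell n)].

Notation c_one := 0%nat (only parsing).
Notation c_zero := 1%nat (only parsing).
Notation c_quarter := 2%nat (only parsing).
Notation c_cell8 := 3%nat (only parsing).
Notation c_cell4 := 4%nat (only parsing).
Notation c_probe_hi := 5%nat (only parsing).
Notation c_probe_lo := 6%nat (only parsing).
Notation c_threshold := 7%nat (only parsing).
Notation c_cell := 8%nat (only parsing).
Notation c_one_minus_cell := 9%nat (only parsing).

Definition has_consts (n : nat) (gs : list lgate) : Prop := prefix (const_gates n) gs.

Lemma has_consts_prefix n gs gs' : has_consts n gs -> prefix gs gs' -> has_consts n gs'.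
Proof. apply prefix_trans. Qed.

Lemma has_consts_length n gs : has_consts n gs -> (10 <= length gs)%nat.
Proof. intros H. apply prefix_length in H. exact H. Qed.

Lemma const_gates_wf n : wf_gates (const_gates n).
Proof.
  change (const_gates n) with ([] ++ const_gates n). apply wf_gates_app.
  - intros p g H. destruct p; discriminate.
  - unfold const_gates. solve_wf.
Qed.

Lemma const_gates_val n gs x : (1 <= n)%nat -> has_consts n gs ->
  gval gs x c_one = 1 /\ gval gs x c_zero = 0 /\ gval gs x c_quarter = 1/4 /\
  gval gs x c_cell8 = cell n / 8 /\ gval gs x c_cell4 = cell n / 4 /\
  gval gs x c_probe_hi = 1 - cell n / 2 /\ gval gs x c_probe_lo = cell n / 2 /\
  gval gs x c_threshold = 1/2 - cell n / 8 /\ gval gs x c_cell = cell n /\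
  gval gs x c_one_minus_cell = 1 - cell n.
Proof.
  intros Hn Hc. pose proof (cell_bounds n Hn).
  rewrite !(gval_prefix _ _ x _ Hc) by (simpl; lia).
  unfold gval, const_gates. simpl. repeat split; apply trunc01_id; lra.
Qed.

Fixpoint tent_block (k : nat) (w : nat) (gs : list lgate) : nat * list lgate :=
  match k with
  | O => (w, gs)
  | S k' => let L := length gs in
      tent_block k' (L + 3)%nat
        (gs ++ [LScale 2 w; LSub c_one w; LScale 2 (L + 1)%nat; LMin L (L + 2)%nat])
  end.

Lemma tent_block_spec n k w gs : (1 <= n)%nat -> has_consts n gs -> (w < length gs)%nat ->
  wf_gates gs ->
  let '(r, gs') := tent_block k w gs in
  prefix gs gs' /\ length gs' = (length gs + 4 * k)%nat /\ wf_gates gs' /\ (r < length gs')%nat /\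
  forall x, inK x -> gval gs' x r = Nat.iter k tent (gval gs x w).
Proof.
  revert w gs. induction k; intros w gs Hn Hc Hw Hwf; simpl.
  - split; [apply prefix_refl|]. split; [lia|]. split; [auto|]. split; [auto|]. reflexivity.
  - pose proof (has_consts_length n gs Hc).
    set (t := [LScale 2 w; LSub c_one w; LScale 2 (length gs + 1)%nat;
               LMin (length gs) (length gs + 2)%nat]).
    assert (Hl1 : length (gs ++ t) = (length gs + 4)%nat) by (rewrite length_app; reflexivity).
    specialize (IHk (length gs + 3)%nat (gs ++ t) Hn
      (has_consts_prefix _ _ _ Hc (prefix_app gs t)) ltac:(lia)
      ltac:(apply wf_gates_app; auto; unfold t; solve_wf)).
    destruct (tent_block k (length gs + 3) (gs ++ t)) as [r gs'].
    destruct IHk as (Hpre & Hl & Hwf' & Hr & Hv).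
    split; [eapply prefix_trans; [apply prefix_app|exact Hpre]|].
    split; [lia|]. split; [auto|]. split; [auto|].
    intros x Hx. rewrite Hv by auto. rewrite <- Nat.iter_succ, Nat.iter_succ_r. f_equal.
    destruct (const_gates_val n gs x Hn Hc) as (Hone & _).
    pose proof (gval_range gs x w Hx).
    unfold t. eval_block. rewrite Hone.
    unfold tent. rewrite (trunc01_id (1 - _)) by lra.
    unfold trunc01. simpl_minmax.
    destruct (Rle_dec (2 * gval gs x w) 1); simpl_minmax; lra.
Qed.

(* Wires of [coord_block n d]: the coordinate [u = x_d], [1 - mix_weight n u],
   and the two probes of [u]. *)
Definition coord_block (n d : nat) (gs : list lgate) : nat * nat * nat * nat * list lgate :=
  let L := length gs in
  let gs1 := gs ++ [LIn d; LScale (/2) L; LAdd (L + 1)%nat c_cell8] in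
  let '(T, gs2) := tent_block (n + 2) (L + 2)%nat gs1 in
  let L2 := length gs2 in
  (L, (L2 + 2)%nat, (L2 + 5)%nat, (L2 + 8)%nat,
   gs2 ++ [LSub T c_quarter; LScale 2 L2; LSub c_one (L2 + 1)%nat;
           LSub L c_cell4; LMin (L2 + 3)%nat c_probe_hi; LMax (L2 + 4)%nat c_probe_lo;
           LAdd L c_cell4; LMin (L2 + 6)%nat c_probe_hi; LMax (L2 + 7)%nat c_probe_lo]).

Lemma coord_block_spec n d gs : (1 <= n)%nat -> (d < 3)%nat -> has_consts n gs -> wf_gates gs ->
  let '(u, om, P, Q, gs') := coord_block n d gs in
  prefix gs gs' /\ length gs' = (length gs + 4 * n + 20)%nat /\ wf_gates gs' /\
  (u < length gs')%nat /\ (om < length gs')%nat /\ (P < length gs')%nat /\ (Q < length gs')%nat /\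
  forall x, inK x ->
    gval gs' x u = coord x d /\ gval gs' x om = 1 - mix_weight n (coord x d) /\
    gval gs' x P = probe_lo n (coord x d) /\ gval gs' x Q = probe_hi n (coord x d).
Proof.
  intros Hn Hd Hc Hwf. unfold coord_block.
  pose proof (has_consts_length n gs Hc).
  set (t1 := [LIn d; LScale (/2) (length gs); LAdd (length gs + 1)%nat c_cell8]).
  assert (Hc1 : has_consts n (gs ++ t1)) by (eapply has_consts_prefix; [exact Hc|apply prefix_app]).
  assert (Hl1 : length (gs ++ t1) = (length gs + 3)%nat) by (rewrite length_app; reflexivity).
  pose proof (tent_block_spec n (n + 2) (length gs + 2)%nat (gs ++ t1) Hn Hc1 ltac:(lia)
    ltac:(apply wf_gates_app; auto; unfold t1; solve_wf)) as FS.
  destruct (tent_block (n + 2) (length gs + 2) (gs ++ t1)) as [T gs2].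
  destruct FS as (Hpre2 & Hl2 & Hw2 & HT & Hv2).
  assert (Hpre : prefix gs gs2) by (eapply prefix_trans; [apply prefix_app|exact Hpre2]).
  assert (Hc2 : has_consts n gs2) by (eapply has_consts_prefix; eauto).
  set (t2 := [LSub T c_quarter; LScale 2 (length gs2); LSub c_one (length gs2 + 1)%nat;
    LSub (length gs) c_cell4; LMin (length gs2 + 3)%nat c_probe_hi;
    LMax (length gs2 + 4)%nat c_probe_lo; LAdd (length gs) c_cell4;
    LMin (length gs2 + 6)%nat c_probe_hi; LMax (length gs2 + 7)%nat c_probe_lo]).
  assert (Hlt : length (gs2 ++ t2) = (length gs2 + 9)%nat) by (rewrite length_app; reflexivity).
  split; [eapply prefix_trans; [exact Hpre|apply prefix_app]|].
  split; [lia|]. split; [apply wf_gates_app; auto; unfold t2; solve_wf|].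
  rewrite Hlt. do 4 (split; [lia|]).
  intros x Hx. pose proof (cell_bounds n Hn). pose proof (coord_range x d Hx).
  destruct (const_gates_val n gs2 x Hn Hc2) as (Hone & _ & Hqt & _ & Hc4 & Hhi & Hlo & _).
  assert (Hu : gval gs2 x (length gs) = coord x d).
  { rewrite (gval_prefix _ _ x _ Hpre2) by lia. eval_block. reflexivity. }
  assert (HT' : gval gs2 x T = tent_probe n (coord x d)).
  { rewrite Hv2 by auto. unfold tent_probe. f_equal. unfold t1. eval_block.
    destruct (const_gates_val n gs x Hn Hc) as (_ & _ & _ & Hc8 & _).
    rewrite Hc8. unfold cell in *.
    rewrite (trunc01_id (/2 * _)), trunc01_id by lra. lra. }
  pose proof (cell_bounds n Hn). unfold t2. split; [|split; [|split]]; eval_block.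
  - exact Hu.
  - rewrite HT', Hqt, Hone. apply trunc01_id.
    pose proof (trunc01_range (2 * trunc01 (tent_probe n (coord x d) - 1 / 4))).
    unfold mix_weight. lra.
  - rewrite Hu, Hc4, Hhi, Hlo, clamp_gates by lra. unfold probe_lo, probe, cell. reflexivity.
  - rewrite Hu, Hc4, Hhi, Hlo, clamp_gates by lra. unfold probe_hi, probe, cell. reflexivity.
Qed.

Lemma cell_mul_pow2 n j : (j <= n)%nat -> cell n * 2 ^ j <= 1.
Proof.
  intros. pose proof (pow2_pos j). pose proof (inv_pow2_le j n H). unfold cell.
  replace 1 with (/ 2 ^ j * 2 ^ j) by (field; lra).
  apply Rmult_le_compat_r; lra.
Qed.

(* [bits_block n k w] extracts the [k] binary digits of the cell index of
   [gval w], most significant first; [nth j bs] is the wire of digit [j]. *)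
Fixpoint bits_block (n k w : nat) (gs : list lgate) : list nat * list lgate :=
  match k with
  | O => ([], gs)
  | S k' => let L := length gs in
      let gs1 := gs ++ [LSub w c_threshold; LScale (4 / cell n) L; LScale (/2) (L + 1)%nat;
                        LSub w (L + 2)%nat; LScale 2 (L + 3)%nat] in
      let '(bs, gs2) := bits_block n k' (L + 4)%nat gs1 in
      (bs ++ [(L + 1)%nat], gs2)
  end.

Lemma bits_block_spec n k w gs : (1 <= n)%nat -> (k <= n)%nat -> has_consts n gs -> wf_gates gs ->
  (w < length gs)%nat ->
  let '(bs, gs') := bits_block n k w gs in
  prefix gs gs' /\ length gs' = (length gs + 5 * k)%nat /\ wf_gates gs' /\
  length bs = k /\ (forall j, (j < k)%nat -> (nth j bs 0 < length gs')%nat) /\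
  forall x, inK x -> forall c rho, (c < 2 ^ k)%nat -> 1/8 <= rho <= 7/8 ->
    gval gs x w = (INR c + rho) / 2 ^ k ->
    forall j, (j < k)%nat -> gval gs' x (nth j bs 0%nat) = b2R (Nat.testbit c j).
Proof.
  revert w gs. induction k; intros w gs Hn Hk Hc Hwf Hw; simpl.
  - split; [apply prefix_refl|]. split; [lia|]. split; [auto|]. split; [auto|].
    split; intros; lia.
  - pose proof (has_consts_length n gs Hc).
    set (t := [LSub w c_threshold; LScale (4 / cell n) (length gs);
               LScale (/2) (length gs + 1)%nat; LSub w (length gs + 2)%nat;
               LScale 2 (length gs + 3)%nat]).
    assert (Hl1 : length (gs ++ t) = (length gs + 5)%nat) by (rewrite length_app; reflexivity).
    specialize (IHk (length gs + 4)%nat (gs ++ t) Hn ltac:(lia)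
      (has_consts_prefix _ _ _ Hc (prefix_app gs t))
      ltac:(apply wf_gates_app; auto; unfold t; solve_wf) ltac:(lia)).
    destruct (bits_block n k (length gs + 4) (gs ++ t)) as [bs gs'].
    destruct IHk as (Hpre & Hl & Hwf' & Hlb & Hbs & Hv).
    split; [eapply prefix_trans; [apply prefix_app|exact Hpre]|].
    split; [lia|]. split; [auto|]. split; [rewrite length_app; simpl; lia|].
    split.
    { intros j Hj. destruct (Nat.lt_ge_cases j k).
      - rewrite app_nth1 by lia. auto.
      - rewrite app_nth2 by lia. replace (j - length bs)%nat with 0%nat by lia. simpl.
        apply prefix_length in Hpre. lia. }
    intros x Hx c rho Hcl Hr Hwv j Hj.
    destruct (const_gates_val n gs x Hn Hc) as (_ & _ & _ & _ & _ & _ & _ & Hthr & _).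
    assert (Hmod : (c mod 2 ^ k < 2 ^ k)%nat)
      by (apply Nat.mod_upper_bound, Nat.pow_nonzero; lia).
    pose proof (cell_bounds n Hn). pose proof (cell_mul_pow2 n (S k) Hk).
    pose proof (INR_lt_pow2 _ _ Hmod). pose proof (pos_INR (c mod 2 ^ k)).
    destruct (bit_step (cell n) (2 ^ k) (INR (c mod 2 ^ k)) rho (Nat.testbit c k))
      as [Hbit Hrest]; auto; try lra.
    assert (Hw2 : gval gs x w =
      (b2R (Nat.testbit c k) * 2 ^ k + INR (c mod 2 ^ k) + rho) / (2 * 2 ^ k))
      by (rewrite Hwv, (nat_split_top k c Hcl); reflexivity).
    assert (Hval : forall p, (p < length (gs ++ t))%nat -> gval gs' x p = gval (gs ++ t) x p)
      by (intros; now apply gval_prefix).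
    destruct (Nat.lt_ge_cases j k).
    + rewrite app_nth1 by lia.
      rewrite (Hv x Hx (c mod 2 ^ k) rho Hmod Hr); [now rewrite Nat.mod_pow2_bits_low| |lia].
      unfold t. eval_block. rewrite Hthr, Hw2, Hbit, <- Hrest. reflexivity.
    + replace j with k by lia. rewrite app_nth2 by lia.
      replace (k - length bs)%nat with 0%nat by lia. simpl.
      rewrite Hval by lia. unfold t. eval_block. rewrite Hthr, Hw2. exact Hbit.
Qed.

Lemma scaled_indicator n a : trunc01 (8 / cell n * trunc01 (a / 2 ^ n)) = trunc01 (8 * a).
Proof.
  pose proof (pow2_pos n). assert (HN1 : 1 <= 2 ^ n) by (apply pow_R1_Rle; lra).
  assert (Hs : forall b, 8 / cell n * (b / 2 ^ n) = 8 * b) by (intros; unfold cell; field; lra).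
  assert (Hdiv : a / 2 ^ n * 2 ^ n = a) by (field; lra).
  destruct (Rle_dec a 0); [|destruct (Rle_dec (a / 2 ^ n) 1)].
  - rewrite (trunc01_le0 (a / _)), (trunc01_le0 (8 * a)) by nra.
    rewrite Rmult_0_r. now apply trunc01_le0.
  - rewrite (trunc01_id (a / _)) by nra. now rewrite Hs.
  - rewrite (trunc01_ge1 (a / _)), (trunc01_ge1 (8 * a)) by nra.
    apply trunc01_ge1. unfold cell, Rdiv. rewrite Rinv_inv. nra.
Qed.

Lemma first_cell_indicator n c rho : (c < 2 ^ n)%nat -> 1/8 <= rho <= 7/8 ->
  trunc01 (8 / cell n * trunc01 (cell n - (INR c + rho) / 2 ^ n)) = b2R (c =? 0)%nat.
Proof.
  intros Hc Hr. pose proof (pow2_pos n).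
  replace (cell n - (INR c + rho) / 2 ^ n) with ((1 - INR c - rho) / 2 ^ n)
    by (unfold cell; field; lra).
  rewrite scaled_indicator. destruct (Nat.eqb_spec c 0) as [->|Hc0]; simpl.
  - apply trunc01_ge1. lra.
  - assert (1 <= INR c) by (apply (le_INR 1); lia). apply trunc01_le0. lra.
Qed.

Lemma last_cell_indicator n c rho : (c < 2 ^ n)%nat -> 1/8 <= rho <= 7/8 ->
  trunc01 (8 / cell n * trunc01 ((INR c + rho) / 2 ^ n - (1 - cell n))) =
  b2R (c =? 2 ^ n - 1)%nat.
Proof.
  intros Hc Hr. pose proof (pow2_pos n).
  replace ((INR c + rho) / 2 ^ n - (1 - cell n)) with ((INR c + rho + 1 - 2 ^ n) / 2 ^ n)
    by (unfold cell; field; lra).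
  rewrite scaled_indicator. destruct (Nat.eqb_spec c (2 ^ n - 1)) as [->|Hc0]; simpl.
  - rewrite INR_pow2_sub1. apply trunc01_ge1. lra.
  - assert (INR c + 2 <= 2 ^ n).
    { rewrite <- INR_pow2. replace 2 with (INR 2) at 1 by reflexivity.
      rewrite <- plus_INR. apply le_INR. lia. }
    apply trunc01_le0. lra.
Qed.

(* Wires carrying the flags [c = 0], [c = 2^n - 1] and the binary digits of
   a cell index [c]. *)
Definition flag_wires : Type := (nat * nat * list nat)%type.

Definition cell_flags (n : nat) (gs : list lgate) (x : pt) (f : flag_wires) (c : nat) : Prop :=
  let '(z, t, bs) := f in
  (c < 2 ^ n)%nat /\ gval gs x z = b2R (c =? 0)%nat /\ gval gs x t = b2R (c =? 2 ^ n - 1)%nat /\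
  forall j, (j < n)%nat -> gval gs x (nth j bs 0%nat) = b2R (Nat.testbit c j).

Definition flag_wires_ok (n : nat) (gs : list lgate) (f : flag_wires) : Prop :=
  let '(z, t, bs) := f in
  (z < length gs)%nat /\ (t < length gs)%nat /\ length bs = n /\
  forall j, (j < n)%nat -> (nth j bs 0 < length gs)%nat.

Lemma flag_wires_ok_prefix n gs gs' f : prefix gs gs' -> flag_wires_ok n gs f ->
  flag_wires_ok n gs' f.
Proof.
  intros Hp. apply prefix_length in Hp. destruct f as [[z t] bs]. simpl.
  intros (? & ? & ? & Hb). repeat split; auto; try lia. intros j Hj. specialize (Hb j Hj). lia.
Qed.

Lemma cell_flags_prefix n gs gs' x f c : prefix gs gs' -> flag_wires_ok n gs f ->
  cell_flags n gs x f c -> cell_flags n gs' x f c.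
Proof.
  intros Hp. destruct f as [[z t] bs]. simpl. intros (Hz & Ht & _ & Hb) (Hc & H1 & H2 & H3).
  rewrite !(gval_prefix _ _ x _ Hp) by auto. repeat split; auto.
  intros j Hj. rewrite (gval_prefix _ _ x _ Hp) by auto. auto.
Qed.

Definition sample_block (n s : nat) (gs : list lgate) : flag_wires * list lgate :=
  let L := length gs in
  let gs1 := gs ++ [LSub c_cell s; LScale (8 / cell n) L; LSub s c_one_minus_cell;
                    LScale (8 / cell n) (L + 2)%nat] in
  let '(bs, gs2) := bits_block n n s gs1 in
  (((L + 1)%nat, (L + 3)%nat, bs), gs2).

Lemma sample_block_spec n s gs : (1 <= n)%nat -> has_consts n gs -> wf_gates gs ->
  (s < length gs)%nat ->
  let '(f, gs') := sample_block n s gs in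
  prefix gs gs' /\ length gs' = (length gs + 5 * n + 4)%nat /\ wf_gates gs' /\
  flag_wires_ok n gs' f /\
  forall x, inK x -> forall c, well_inside n (gval gs x s) c -> cell_flags n gs' x f c.
Proof.
  intros Hn Hc Hwf Hs. unfold sample_block.
  pose proof (has_consts_length n gs Hc).
  set (t1 := [LSub c_cell s; LScale (8 / cell n) (length gs); LSub s c_one_minus_cell;
              LScale (8 / cell n) (length gs + 2)%nat]).
  assert (Hl1 : length (gs ++ t1) = (length gs + 4)%nat) by (rewrite length_app; reflexivity).
  pose proof (bits_block_spec n n s (gs ++ t1) Hn (le_n n)
    (has_consts_prefix _ _ _ Hc (prefix_app gs t1))
    ltac:(apply wf_gates_app; auto; unfold t1; solve_wf) ltac:(lia)) as BS.
  destruct (bits_block n n s (gs ++ t1)) as [bs gs'].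
  destruct BS as (Hpre & Hl & Hwf' & Hlb & Hbs & Hv).
  pose proof (prefix_length _ _ Hpre).
  split; [eapply prefix_trans; [apply prefix_app|exact Hpre]|].
  split; [lia|]. split; [auto|]. split; [repeat split; auto; lia|].
  intros x Hx c [Hcn [rho [Hr Hsv]]].
  destruct (const_gates_val n gs x Hn Hc) as (_ & _ & _ & _ & _ & _ & _ & _ & Hcell & Hmcell).
  split; [auto|]. split; [|split].
  - rewrite (gval_prefix _ _ x _ Hpre) by lia. unfold t1. eval_block.
    rewrite Hcell, Hsv. now apply first_cell_indicator.
  - rewrite (gval_prefix _ _ x _ Hpre) by lia. unfold t1. eval_block.
    rewrite Hmcell, Hsv. now apply last_cell_indicator.
  - intros j Hj. apply (Hv x Hx c rho Hcn Hr); auto.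
    rewrite gval_app_l by lia. exact Hsv.
Qed.

Definition bgate_to_lgate (base : nat) (input : nat -> nat) (g : bgate) : lgate :=
  match g with
  | BIn t => LMax (input t) (input t)
  | BConst b => LConst (b2R b)
  | BNot i => LSub c_one (base + i)%nat
  | BAnd i j => LMin (base + i)%nat (base + j)%nat
  | BOr i j => LMax (base + i)%nat (base + j)%nat
  end.

Lemma beval_aux_snoc inp bg g acc :
  beval_aux inp (bg ++ [g]) acc =
  beval_aux inp bg acc ++ [bgate_val inp (beval_aux inp bg acc) g].
Proof. revert acc; induction bg; intros; simpl; auto. Qed.

Lemma beval_aux_length inp bg acc :
  length (beval_aux inp bg acc) = (length acc + length bg)%nat.
Proof. revert acc; induction bg; intros; simpl; [lia|]. rewrite IHbg, length_app. simpl. lia. Qed.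

Lemma bcircuit_simulation n m bg gs input inp : (1 <= n)%nat -> has_consts n gs -> wf_gates gs ->
  (forall p g, nth_error bg p = Some g -> bgate_wf m p g) ->
  (forall t, (t < m)%nat -> (input t < length gs)%nat) ->
  wf_gates (gs ++ map (bgate_to_lgate (length gs) input) bg) /\
  forall x, inK x -> (forall t, (t < m)%nat -> gval gs x (input t) = b2R (inp t)) ->
    forall p, (p < length bg)%nat ->
      gval (gs ++ map (bgate_to_lgate (length gs) input) bg) x (length gs + p) =
      b2R (nth p (beval_aux inp bg []) false).
Proof.
  intros Hn Hc Hwf Hbw Hin. pose proof (has_consts_length n gs Hc).
  induction bg as [|g bg IH] using rev_ind.
  - simpl. rewrite app_nil_r. split; auto. intros; simpl in *; lia.
  - assert (Hbw' : forall p g, nth_error bg p = Some g -> bgate_wf m p g).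
    { intros p g' Hp. apply Hbw. rewrite nth_error_app1; auto. apply nth_error_Some. congruence. }
    destruct (IH Hbw') as [IHw IHv].
    assert (Hg : bgate_wf m (length bg) g)
      by (apply Hbw; rewrite nth_error_app2, Nat.sub_diag by lia; reflexivity).
    rewrite map_app, app_assoc. simpl.
    set (sim := map (bgate_to_lgate (length gs) input) bg) in *. split.
    + apply wf_gates_app; auto. intros j g' Hj. destruct j; [|destruct j; discriminate].
      simpl in Hj. inversion Hj; subst. rewrite length_app. unfold sim. rewrite length_map.
      destruct g; simpl in *; try split; try lia; try exact I.
      specialize (Hin k Hg). lia.
    + intros x Hx Hinp p Hp. rewrite length_app in Hp. simpl in Hp.
      rewrite beval_aux_snoc.
      assert (Hsim : length (gs ++ sim) = (length gs + length bg)%nat)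
        by (unfold sim; rewrite length_app, length_map; lia).
      destruct (Nat.lt_ge_cases p (length bg)).
      * rewrite gval_app_l by lia.
        rewrite IHv by auto. rewrite app_nth1 by (rewrite beval_aux_length; simpl; lia).
        reflexivity.
      * replace p with (length bg) by lia.
        rewrite app_nth2 by (rewrite beval_aux_length; simpl; lia).
        rewrite beval_aux_length, Nat.sub_diag. simpl.
        rewrite <- Hsim, gval_snoc.
        assert (Hprev : forall i, (i < length bg)%nat ->
          gval (gs ++ sim) x (length gs + i) = b2R (nth i (beval_aux inp bg []) false))
          by (intros; apply IHv; auto).
        destruct g; simpl in *.
        -- rewrite gval_app_l by (specialize (Hin k Hg); lia). rewrite Hinp by auto.
           rewrite Rmax_left by lra. apply trunc01_b2R.
        -- apply trunc01_b2R.
        -- rewrite Hprev, gval_app_l by lia.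
           destruct (const_gates_val n gs x Hn Hc) as (Hone & _). rewrite Hone.
           apply trunc01_not_b2R.
        -- destruct Hg. rewrite !Hprev by lia. apply trunc01_min_b2R.
        -- destruct Hg. rewrite !Hprev by lia. apply trunc01_max_b2R.
Qed.

(* Gates of [color_gates], followed by the products of a weight [w] with the
   four colour indicators (wires 28 to 31 of the block). *)
Definition color_tail (L w o0 o1 zx zy zz tx ty tz : nat) : list lgate :=
  [LSub c_one o0; LSub c_one o1; LMin L (L+1); LMin L o1; LMin o0 (L+1); LMin o0 o1;
   LSub c_one zx; LSub c_one zy; LSub c_one zz; LMax tx ty; LMax (L+9) tz;
   LMax zx zy; LMax (L+11) zz; LMax (L+12) (L+10); LSub c_one (L+13);
   LMin (L+6) zy; LMin (L+6) (L+7); LMin (L+16) zz; LMin (L+16) (L+8); LMin (L+18) (L+10);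
   LMin (L+14) (L+2); LMax (L+19) (L+20); LMin (L+14) (L+3); LMax zx (L+22);
   LMin (L+14) (L+4); LMax (L+15) (L+24); LMin (L+14) (L+5); LMax (L+17) (L+26);
   LMin w (L+21); LMin w (L+23); LMin w (L+25); LMin w (L+27)]%nat.

Lemma color_tail_wf gs w o0 o1 zx zy zz tx ty tz : wf_gates gs -> (10 <= length gs)%nat ->
  Forall (fun i => i < length gs)%nat [w; o0; o1; zx; zy; zz; tx; ty; tz] ->
  wf_gates (gs ++ color_tail (length gs) w o0 o1 zx zy zz tx ty tz).
Proof.
  intros Hw H10 Hidx. rewrite !Forall_cons_iff in Hidx.
  destruct Hidx as (? & ? & ? & ? & ? & ? & ? & ? & ? & _).
  apply wf_gates_app; auto. unfold color_tail. solve_wf.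
Qed.

Lemma color_tail_zero gs x w o0 o1 zx zy zz tx ty tz : inK x -> (w < length gs)%nat ->
  gval gs x w = 0 -> forall q, (q < 4)%nat ->
  gval (gs ++ color_tail (length gs) w o0 o1 zx zy zz tx ty tz) x (length gs + 28 + q) = 0.
Proof.
  intros Hx Hw Hz q Hq.
  rewrite <- Nat.add_assoc, gval_app_r.
  destruct q as [|[|[|[|q]]]]; try lia; simpl; rewrite gval_app_l, Hz by (simpl; lia);
    match goal with |- trunc01 (Rmin 0 (gval ?G x ?P)) = 0 =>
      pose proof (gval_range G x P Hx); rewrite Rmin_left by lra; apply trunc01_id; lra end.
Qed.

Lemma color_tail_spec n gs x w o0 o1 zx zy zz tx ty tz W (bo0 bo1 bzx bzy bzz btx bty btz : bool) :
  (1 <= n)%nat -> has_consts n gs ->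
  Forall (fun i => i < length gs)%nat [w; o0; o1; zx; zy; zz; tx; ty; tz] ->
  gval gs x w = W -> 0 <= W <= 1 ->
  gval gs x o0 = b2R bo0 -> gval gs x o1 = b2R bo1 ->
  gval gs x zx = b2R bzx -> gval gs x zy = b2R bzy -> gval gs x zz = b2R bzz ->
  gval gs x tx = b2R btx -> gval gs x ty = b2R bty -> gval gs x tz = b2R btz ->
  forall q, (q < 4)%nat ->
  gval (gs ++ color_tail (length gs) w o0 o1 zx zy zz tx ty tz) x (length gs + 28 + q) =
  W * b2R (color_of bzx bzy bzz btx bty btz bo0 bo1 =? q)%nat.
Proof.
  intros Hn Hc Hidx HW HW01 Ho0 Ho1 Hzx Hzy Hzz Htx Hty Htz q Hq.
  rewrite !Forall_cons_iff in Hidx.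
  destruct Hidx as (? & ? & ? & ? & ? & ? & ? & ? & ? & _).
  destruct (const_gates_val n gs x Hn Hc) as (Hone & _).
  pose proof (color_gates_correct bzx bzy bzz btx bty btz bo0 bo1) as LO.
  unfold color_gates in LO. cbv zeta in LO. injection LO as LO0 LO1 LO2 LO3.
  assert (Hb : forall b, trunc01 (Rmin W (b2R b)) = W * b2R b).
  { intros []; cbn [b2R].
    - rewrite Rmin_left, Rmult_1_r by lra. now apply trunc01_id.
    - rewrite Rmin_right, Rmult_0_r by lra. apply trunc01_id; lra. }
  replace (length gs + 28 + q)%nat with (length gs + (28 + q))%nat by lia.
  rewrite <- Hb.
  destruct q as [|[|[|[|q]]]]; try lia; [rewrite <- LO0|rewrite <- LO1|rewrite <- LO2|rewrite <- LO3];
    unfold color_tail; eval_block;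
    rewrite HW, Hone, Ho0, Ho1, ?Hzx, ?Hzy, ?Hzz, ?Htx, ?Hty, ?Htz; reflexivity.
Qed.

Lemma Rmin_range a b : 0 <= a <= 1 -> 0 <= b <= 1 -> 0 <= Rmin a b <= 1.
Proof. unfold Rmin. destruct Rle_dec; lra. Qed.

Lemma Rmax_range a b : 0 <= a <= 1 -> 0 <= b <= 1 -> 0 <= Rmax a b <= 1.
Proof. unfold Rmax. destruct Rle_dec; lra. Qed.

Definition weight_gates (L lx ux ly uy lz uz : nat) : list lgate :=
  [LMin ux uy; LMin L uz; LMax lx ly; LMax (L + 2)%nat lz; LSub (L + 1)%nat (L + 3)%nat].

Definition interval_weight (gs : list lgate) (x : pt) (lx ux ly uy lz uz : nat) : R :=
  Rmax 0 (Rmin (Rmin (gval gs x ux) (gval gs x uy)) (gval gs x uz) -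
          Rmax (Rmax (gval gs x lx) (gval gs x ly)) (gval gs x lz)).

Lemma weight_gates_val gs x lx ux ly uy lz uz : inK x ->
  Forall (fun i => i < length gs)%nat [lx; ux; ly; uy; lz; uz] ->
  gval (gs ++ weight_gates (length gs) lx ux ly uy lz uz) x (length gs + 4) =
  interval_weight gs x lx ux ly uy lz uz.
Proof.
  intros Hx Hidx. rewrite !Forall_cons_iff in Hidx.
  destruct Hidx as (? & ? & ? & ? & ? & ? & _).
  unfold weight_gates. eval_block. unfold interval_weight.
  pose proof (gval_range gs x lx Hx); pose proof (gval_range gs x ux Hx);
  pose proof (gval_range gs x ly Hx); pose proof (gval_range gs x uy Hx);
  pose proof (gval_range gs x lz Hx); pose proof (gval_range gs x uz Hx).
  set (a := gval gs x ux) in *; set (b := gval gs x uy) in *; set (c := gval gs x uz) in *;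
  set (d := gval gs x lx) in *; set (e := gval gs x ly) in *; set (g := gval gs x lz) in *.
  assert (Hab : 0 <= Rmin a b <= 1) by (apply Rmin_range; lra).
  assert (Hde : 0 <= Rmax d e <= 1) by (apply Rmax_range; lra).
  assert (Hmin : 0 <= Rmin (Rmin a b) c <= 1) by (apply Rmin_range; lra).
  assert (Hmax : 0 <= Rmax (Rmax d e) g <= 1) by (apply Rmax_range; lra).
  rewrite (trunc01_id (Rmin a b)), (trunc01_id (Rmax d e)) by lra.
  rewrite (trunc01_id (Rmin (Rmin a b) c)), (trunc01_id (Rmax (Rmax d e) g)) by lra.
  unfold trunc01. rewrite (Rmin_right 1) by lra. reflexivity.
Qed.

Definition digit_wires (f : flag_wires) : list nat := let '(_, _, bs) := f in bs.

Definition input_wire (n : nat) (fx fy fz : flag_wires) (t : nat) : nat :=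
  if (t <? n)%nat then nth t (digit_wires fx) 0%nat
  else if (t <? 2 * n)%nat then nth (t - n) (digit_wires fy) 0%nat
  else nth (t - 2 * n) (digit_wires fz) 0%nat.

Lemma input_wire_bound n gs fx fy fz t :
  flag_wires_ok n gs fx -> flag_wires_ok n gs fy -> flag_wires_ok n gs fz -> (t < 3 * n)%nat ->
  (input_wire n fx fy fz t < length gs)%nat.
Proof.
  destruct fx as [[? ?] bx], fy as [[? ?] by'], fz as [[? ?] bz]. simpl.
  intros (_ & _ & _ & Hx) (_ & _ & _ & Hy) (_ & _ & _ & Hz) Ht. unfold input_wire, digit_wires.
  destruct (Nat.ltb_spec t n); [auto|].
  destruct (Nat.ltb_spec t (2 * n)); [apply Hy; lia|apply Hz; lia].
Qed.

Lemma input_wire_val n gs x fx fy fz cx cy cz t :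
  cell_flags n gs x fx cx -> cell_flags n gs x fy cy -> cell_flags n gs x fz cz ->
  (t < 3 * n)%nat ->
  gval gs x (input_wire n fx fy fz t) = b2R (cube_input n cx cy cz t).
Proof.
  destruct fx as [[? ?] bx], fy as [[? ?] by'], fz as [[? ?] bz]. simpl.
  intros (_ & _ & _ & Hx) (_ & _ & _ & Hy) (_ & _ & _ & Hz) Ht.
  unfold input_wire, cube_input, digit_wires.
  destruct (Nat.ltb_spec t n); [auto|].
  destruct (Nat.ltb_spec t (2 * n)); [apply Hy; lia|apply Hz; lia].
Qed.

Definition weighted_circuit_block (n : nat) (B : bcircuit) (lx ux ly uy lz uz : nat)
  (fx fy fz : flag_wires) (gs : list lgate) : list lgate :=
  let gs1 := gs ++ weight_gates (length gs) lx ux ly uy lz uz in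
  gs1 ++ map (bgate_to_lgate (length gs1) (input_wire n fx fy fz)) (bgates B).

Lemma weighted_circuit_block_spec n B lx ux ly uy lz uz fx fy fz gs :
  (1 <= n)%nat -> bcircuit_wf (3 * n) B -> has_consts n gs -> wf_gates gs ->
  Forall (fun i => i < length gs)%nat [lx; ux; ly; uy; lz; uz] ->
  flag_wires_ok n gs fx -> flag_wires_ok n gs fy -> flag_wires_ok n gs fz ->
  let gs' := weighted_circuit_block n B lx ux ly uy lz uz fx fy fz gs in
  prefix gs gs' /\ length gs' = (length gs + 5 + length (bgates B))%nat /\ wf_gates gs' /\
  forall x, inK x ->
    gval gs' x (length gs + 4) = interval_weight gs x lx ux ly uy lz uz /\
    forall cx cy cz,
      cell_flags n gs x fx cx -> cell_flags n gs x fy cy -> cell_flags n gs x fz cz ->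
      forall p, (p < length (bgates B))%nat ->
        gval gs' x (length gs + 5 + p) =
        b2R (nth p (beval_aux (cube_input n cx cy cz) (bgates B) []) false).
Proof.
  intros Hn [HBw _] Hc Hwf Hidx Hfx Hfy Hfz gs'. unfold gs', weighted_circuit_block.
  pose proof (has_consts_length n gs Hc).
  set (gs1 := gs ++ weight_gates (length gs) lx ux ly uy lz uz).
  assert (Hp1 : prefix gs gs1) by apply prefix_app.
  assert (Hc1 : has_consts n gs1) by (eapply has_consts_prefix; eauto).
  assert (Hl1 : length gs1 = (length gs + 5)%nat) by (unfold gs1; rewrite length_app; reflexivity).
  assert (Hw1 : wf_gates gs1).
  { rewrite !Forall_cons_iff in Hidx. destruct Hidx as (? & ? & ? & ? & ? & ? & _).
    apply wf_gates_app; auto. unfold weight_gates. solve_wf. }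
  assert (Hin : forall t, (t < 3 * n)%nat -> (input_wire n fx fy fz t < length gs1)%nat)
    by (intros; apply input_wire_bound; auto; apply (flag_wires_ok_prefix n gs gs1); auto).
  pose proof (fun inp => bcircuit_simulation n (3 * n) (bgates B) gs1 (input_wire n fx fy fz) inp
    Hn Hc1 Hw1 HBw Hin) as SIM.
  rewrite <- Hl1.
  split; [eapply prefix_trans; [exact Hp1|apply prefix_app]|].
  split; [rewrite length_app, length_map; lia|].
  split; [apply (SIM (fun _ => false))|].
  intros x Hx. split.
  - rewrite gval_app_l by lia. now apply weight_gates_val.
  - intros cx cy cz Fx Fy Fz. apply (SIM (cube_input n cx cy cz)); auto.
    intros t Ht. apply input_wire_val; auto; apply (cell_flags_prefix n gs gs1); auto.
Qed.

(* [corner_block] multiplies the weight of a corner (the intersection of the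
   intervals [[l, u]] of the three coordinates) with the indicators of the
   colour of the cubelet whose flags are [fx], [fy], [fz]. *)
Definition corner_block (n : nat) (B : bcircuit) (lx ux ly uy lz uz : nat)
  (fx fy fz : flag_wires) (gs : list lgate) : nat * list lgate :=
  let '(zx, tx, _) := fx in let '(zy, ty, _) := fy in let '(zz, tz, _) := fz in
  let L := length gs in
  let gs2 := weighted_circuit_block n B lx ux ly uy lz uz fx fy fz gs in
  let L2 := length gs2 in
  ((L2 + 28)%nat,
   gs2 ++ color_tail L2 (L + 4) (L + 5 + bout0 B) (L + 5 + bout1 B) zx zy zz tx ty tz).

Lemma corner_block_spec n B lx ux ly uy lz uz fx fy fz gs :
  (1 <= n)%nat -> bcircuit_wf (3 * n) B -> has_consts n gs -> wf_gates gs ->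
  Forall (fun i => i < length gs)%nat [lx; ux; ly; uy; lz; uz] ->
  flag_wires_ok n gs fx -> flag_wires_ok n gs fy -> flag_wires_ok n gs fz ->
  let '(w, gs') := corner_block n B lx ux ly uy lz uz fx fy fz gs in
  prefix gs gs' /\ length gs' = (length gs + length (bgates B) + 37)%nat /\ wf_gates gs' /\
  (w + 3 < length gs')%nat /\
  forall x, inK x -> forall cx cy cz,
    (0 < interval_weight gs x lx ux ly uy lz uz ->
       cell_flags n gs x fx cx /\ cell_flags n gs x fy cy /\ cell_flags n gs x fz cz) ->
    forall q, (q < 4)%nat ->
      gval gs' x (w + q) =
      interval_weight gs x lx ux ly uy lz uz * b2R (brouwer_f B n cx cy cz =? q)%nat.
Proof.
  intros Hn HB Hc Hwf Hidx Hfx Hfy Hfz.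
  pose proof (has_consts_length n gs Hc). pose proof HB as (_ & Hb0 & Hb1).
  pose proof (weighted_circuit_block_spec n B lx ux ly uy lz uz fx fy fz gs
    Hn HB Hc Hwf Hidx Hfx Hfy Hfz) as (Hp & Hl & Hw & V).
  unfold corner_block.
  set (gs2 := weighted_circuit_block n B lx ux ly uy lz uz fx fy fz gs) in *.
  destruct fx as [[zx tx] bsx], fy as [[zy ty] bsy], fz as [[zz tz] bsz].
  destruct Hfx as (Hzx & Htx & _), Hfy as (Hzy & Hty & _), Hfz as (Hzz & Htz & _).
  assert (Hwires : Forall (fun i => i < length gs2)%nat
    [length gs + 4; length gs + 5 + bout0 B; length gs + 5 + bout1 B; zx; zy; zz; tx; ty; tz]%nat)
    by (repeat constructor; lia).
  split; [eapply prefix_trans; [exact Hp|apply prefix_app]|].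
  split; [rewrite length_app; simpl; lia|].
  split; [apply color_tail_wf; auto; lia|].
  split; [rewrite length_app; simpl; lia|].
  intros x Hx cx cy cz Hflags q Hq.
  destruct (V x Hx) as [HW Hsim].
  pose proof (gval_range gs2 x (length gs + 4) Hx) as HW01. rewrite HW in HW01.
  destruct (Rle_lt_dec (interval_weight gs x lx ux ly uy lz uz) 0) as [H0|Hpos].
  - rewrite color_tail_zero by (first [assumption | lia | rewrite HW; lra]).
    replace (interval_weight gs x lx ux ly uy lz uz) with 0 by lra. ring.
  - destruct (Hflags Hpos) as (Fx & Fy & Fz).
    pose proof Fx as (_ & Fzx & Ftx & _); pose proof Fy as (_ & Fzy & Fty & _);
    pose proof Fz as (_ & Fzz & Ftz & _).
    specialize (Hsim cx cy cz Fx Fy Fz).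
    assert (Hgs : forall p, (p < length gs)%nat -> gval gs2 x p = gval gs x p)
      by (intros; now apply gval_prefix).
    rewrite brouwer_f_color_of.
    apply (color_tail_spec n); eauto using has_consts_prefix;
      try (apply Hsim; assumption); rewrite ?Hgs by lia; eauto.
Qed.

Fixpoint sum_block (s : nat) (ws : list nat) (gs : list lgate) : nat * list lgate :=
  match ws with
  | [] => (s, gs)
  | w :: ws' => sum_block (length gs) ws' (gs ++ [LAdd s w])
  end.

Definition gsum (gs : list lgate) (x : pt) (ws : list nat) : R :=
  fold_right (fun w acc => gval gs x w + acc) 0 ws.

Lemma gsum_ge0 gs x ws : inK x -> 0 <= gsum gs x ws.
Proof.
  intros Hx. induction ws as [|w ws IH]; unfold gsum in *; simpl; [lra|].
  pose proof (gval_range gs x w Hx). lra.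
Qed.

Lemma gsum_prefix gs gs' x ws : prefix gs gs' -> Forall (fun w => w < length gs)%nat ws ->
  gsum gs' x ws = gsum gs x ws.
Proof.
  intros Hp Hws. induction Hws; unfold gsum in *; simpl; auto.
  rewrite IHHws, (gval_prefix _ _ x _ Hp); auto.
Qed.

Lemma sum_block_spec ws s gs : wf_gates gs -> (s < length gs)%nat ->
  Forall (fun w => w < length gs)%nat ws ->
  let '(r, gs') := sum_block s ws gs in
  prefix gs gs' /\ length gs' = (length gs + length ws)%nat /\ wf_gates gs' /\
  (r < length gs')%nat /\
  forall x, inK x -> gval gs x s + gsum gs x ws <= 1 -> gval gs' x r = gval gs x s + gsum gs x ws.
Proof.
  revert s gs. induction ws as [|w ws IH]; intros s gs Hw Hs Hf; simpl.
  - split; [apply prefix_refl|]. split; [lia|]. split; [auto|]. split; [auto|].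
    intros. unfold gsum; simpl; ring.
  - inversion Hf as [|? ? Hw0 Hws]; subst.
    assert (Hl1 : length (gs ++ [LAdd s w]) = S (length gs)) by (rewrite length_app; simpl; lia).
    specialize (IH (length gs) (gs ++ [LAdd s w])
      ltac:(apply wf_gates_app; auto; solve_wf) ltac:(lia)
      ltac:(eapply Forall_impl; [|exact Hws]; simpl; intros; lia)).
    destruct (sum_block (length gs) ws (gs ++ [LAdd s w])) as [r gs'].
    destruct IH as (Hpre & Hl & Hw' & Hr & Hv).
    split; [eapply prefix_trans; [apply prefix_app|exact Hpre]|].
    split; [simpl; lia|]. split; [auto|]. split; [auto|].
    intros x Hx Htot.
    change (gsum gs x (w :: ws)) with (gval gs x w + gsum gs x ws) in *.
    pose proof (gval_range gs x s Hx). pose proof (gval_range gs x w Hx).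
    pose proof (gsum_ge0 gs x ws Hx).
    assert (Hrs : gsum (gs ++ [LAdd s w]) x ws = gsum gs x ws)
      by (apply gsum_prefix; auto; apply prefix_app).
    assert (Hv1 : gval (gs ++ [LAdd s w]) x (length gs) = gval gs x s + gval gs x w).
    { eval_block. apply trunc01_id. lra. }
    rewrite Hv, Hv1, Hrs; [ring|auto|]. rewrite Hv1, Hrs. lra.
Qed.

Lemma alpha_bounds n : (1 <= n)%nat -> 0 < alpha n <= 1/4.
Proof.
  intros. unfold alpha. split; [apply Rinv_0_lt_compat, pow2_pos|].
  replace (1/4) with (/ 2 ^ 2) by (simpl; field).
  apply inv_pow2_le. lia.
Qed.

(* Computes [u + alpha (p - m)]; working with [u/2 + 1/4] keeps every
   intermediate value inside [0, 1], so no gate truncates. *)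
Definition output_block (n u p m : nat) (gs : list lgate) : nat * list lgate :=
  let L := length gs in
  ((L + 7)%nat,
   gs ++ [LScale (/2) u; LAdd L c_quarter; LScale (alpha n / 2) p; LAdd (L + 1)%nat (L + 2)%nat;
          LScale (alpha n / 2) m; LSub (L + 3)%nat (L + 4)%nat; LSub (L + 5)%nat c_quarter;
          LScale 2 (L + 6)%nat]).

Lemma output_block_spec n u p m gs : (1 <= n)%nat -> has_consts n gs -> wf_gates gs ->
  (u < length gs)%nat -> (p < length gs)%nat -> (m < length gs)%nat ->
  let '(o, gs') := output_block n u p m gs in
  prefix gs gs' /\ length gs' = (length gs + 8)%nat /\ wf_gates gs' /\ (o < length gs')%nat /\
  forall x, inK x -> 0 <= gval gs x u + alpha n * (gval gs x p - gval gs x m) <= 1 ->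
    gval gs' x o = gval gs x u + alpha n * (gval gs x p - gval gs x m).
Proof.
  intros Hn Hc Hw Hu Hp Hm. unfold output_block.
  pose proof (has_consts_length n gs Hc).
  split; [apply prefix_app|]. split; [rewrite length_app; simpl; lia|].
  split; [apply wf_gates_app; auto; solve_wf|]. split; [rewrite length_app; simpl; lia|].
  intros x Hx HV. destruct (const_gates_val n gs x Hn Hc) as (_ & _ & Hqt & _).
  pose proof (alpha_bounds n Hn). pose proof (gval_range gs x u Hx).
  pose proof (gval_range gs x p Hx). pose proof (gval_range gs x m Hx).
  eval_block. rewrite Hqt.
  set (a := alpha n) in *. set (U := gval gs x u) in *.
  set (P := gval gs x p) in *. set (M := gval gs x m) in *.
  assert (0 <= a / 2 * P <= 1/8) by nra. assert (0 <= a / 2 * M <= 1/8) by nra.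
  rewrite (trunc01_id (/2 * U)), (trunc01_id (/2 * U + 1/4)) by lra.
  rewrite (trunc01_id (a / 2 * P)), (trunc01_id (a / 2 * M)) by lra.
  rewrite (trunc01_id (/ 2 * U + 1 / 4 + a / 2 * P)) by lra.
  rewrite (trunc01_id (/ 2 * U + 1 / 4 + a / 2 * P - a / 2 * M)) by lra.
  rewrite (trunc01_id (/ 2 * U + 1 / 4 + a / 2 * P - a / 2 * M - 1/4)) by nra.
  rewrite trunc01_id by nra. field.
Qed.

(** * Colour combinations *)

Definition cube : Type := (nat * nat * nat)%type.

Definition cube_color (B : bcircuit) (n : nat) (c : cube) : nat :=
  let '(i, j, k) := c in brouwer_f B n i j k.

Definition cube_center (n : nat) (c : cube) : pt := let '(i, j, k) := c in center n i j k.

Definition cube_in_range (n : nat) (c : cube) : Prop :=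
  let '(i, j, k) := c in (i < 2 ^ n)%nat /\ (j < 2 ^ n)%nat /\ (k < 2 ^ n)%nat.

Definition total_weight (l : list (R * cube)) : R := fold_right (fun p s => fst p + s) 0 l.

Definition displacement (B : bcircuit) (n : nat) (l : list (R * cube)) : pt :=
  fold_right (fun p s => vadd (vscale (fst p) (delta_col n (cube_color B n (snd p)))) s) vzero l.

(* [implements], with the convex combination indexed by cubelets; at a
   cubelet centre only that cubelet may occur. *)
Definition color_combination (B : bcircuit) (n : nat) (F : pt -> pt) : Prop :=
  forall x, inK x -> exists l : list (R * cube),
    (forall w c, In (w, c) l ->
       0 <= w /\ cube_in_range n c /\ dist_inf (cube_center n c) x <= / 2 ^ n) /\
    total_weight l = 1 /\ vsub (F x) x = displacement B n l /\
    (forall i j k, x = center n i j k -> forall w c, In (w, c) l -> c = (i, j, k)).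

Lemma center_coord_range n a : (a < 2 ^ n)%nat -> 0 <= (INR a + /2) / 2 ^ n <= 1.
Proof.
  intros Ha. pose proof (pow2_pos n). pose proof (INR_lt_pow2 a n Ha). pose proof (pos_INR a).
  split.
  - apply Rmult_le_pos; [lra|left; apply Rinv_0_lt_compat; lra].
  - apply Rmult_le_reg_r with (2 ^ n); auto. unfold Rdiv. rewrite Rmult_assoc, Rinv_l; lra.
Qed.

Lemma center_inK n i j k : (i < 2 ^ n)%nat -> (j < 2 ^ n)%nat -> (k < 2 ^ n)%nat ->
  inK (center n i j k).
Proof. intros. unfold inK, center, cx, cy, cz; simpl. repeat split; apply center_coord_range; auto. Qed.

Lemma displacement_const B n l c0 : (forall w c, In (w, c) l -> c = c0) ->
  displacement B n l = vscale (total_weight l) (delta_col n (cube_color B n c0)).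
Proof.
  induction l as [|[w c] l IH]; intros Hc; simpl.
  - unfold vscale, vzero. destruct (delta_col n (cube_color B n c0)) as [[a b] d].
    unfold cx, cy, cz; simpl. f_equal; [f_equal|]; ring.
  - rewrite IH by (intros; eapply Hc; right; eauto). rewrite (Hc w c) by (left; auto).
    unfold vadd, vscale, cx, cy, cz; simpl. f_equal; [f_equal|]; ring.
Qed.

Lemma implements_of_color_combination B n F : color_combination B n F -> implements B n F.
Proof.
  intros HK.
  assert (Hcen : forall i j k, (i < 2 ^ n)%nat -> (j < 2 ^ n)%nat -> (k < 2 ^ n)%nat ->
    vsub (F (center n i j k)) (center n i j k) = delta_col n (brouwer_f B n i j k)).
  { intros i j k Hi Hj Hk.
    destruct (HK _ (center_inK n i j k Hi Hj Hk)) as (l & _ & Hs & Hv & Hc).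
    rewrite Hv, (displacement_const B n l (i, j, k)) by (eapply Hc; reflexivity). rewrite Hs.
    simpl. unfold vscale. destruct (delta_col n (brouwer_f B n i j k)) as [[a b] d].
    unfold cx, cy, cz; simpl. f_equal; [f_equal|]; ring. }
  split; auto.
  intros x Hx _. destruct (HK x Hx) as (l & Hl & Hs & Hv & _).
  exists (map (fun p => (fst p, cube_center n (snd p))) l). split; [|split].
  - intros w z Hin. apply in_map_iff in Hin as ([w' c] & Heq & Hin).
    simpl in Heq. inversion Heq; subst.
    destruct (Hl w c Hin) as (Hw & Hc & Hd). split; auto. split; auto.
    destruct c as [[i j] k]. destruct Hc as (? & ? & ?). exists i, j, k. repeat split; auto.
  - rewrite <- Hs. unfold total_weight. clear. induction l; simpl; auto. now rewrite IHl.
  - rewrite Hv. unfold displacement. clear Hv Hs.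
    induction l as [|[w c] l IH]; simpl; auto.
    rewrite IH by (intros; eapply Hl; right; eauto).
    destruct c as [[i j] k]. destruct (Hl w (i, j, k) (or_introl eq_refl)) as (_ & (? & ? & ?) & _).
    simpl. rewrite Hcen; auto.
Qed.

Definition fsum {A : Type} (cs : list A) (g : A -> R) : R :=
  fold_right (fun c acc => g c + acc) 0 cs.

Lemma fsum_le {A} (cs : list A) g h : (forall c, g c <= h c) -> fsum cs g <= fsum cs h.
Proof. intros H. induction cs; unfold fsum in *; simpl; [lra|]. specialize (H a). lra. Qed.

Lemma fsum_add {A} (cs : list A) g h : fsum cs g + fsum cs h = fsum cs (fun c => g c + h c).
Proof. induction cs; unfold fsum in *; simpl; [ring|]. rewrite <- IHcs. ring. Qed.

Lemma fsum_ge0 {A} (cs : list A) g : (forall c, 0 <= g c) -> 0 <= fsum cs g.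
Proof. intros H. induction cs; unfold fsum in *; simpl; [lra|]. specialize (H a). lra. Qed.

Lemma fsum_zero {A} (cs : list A) g : (forall c, g c = 0) -> fsum cs g = 0.
Proof. intros H. induction cs; unfold fsum in *; simpl; [lra|]. rewrite H. lra. Qed.

Definition cube_coord (c : cube) (d : nat) : nat :=
  let '(i, j, k) := c in match d with 0%nat => i | 1%nat => j | _ => k end.

Lemma cube_color_le3 B n c : (cube_color B n c <= 3)%nat.
Proof.
  destruct c as [[i j] k]. simpl. rewrite brouwer_f_color_of. unfold color_of.
  generalize (nth (bout0 B) (beval_aux (cube_input n i j k) (bgates B) []) false)
             (nth (bout1 B) (beval_aux (cube_input n i j k) (bgates B) []) false).
  intros [] [];
    repeat match goal with |- context [if ?b then _ else _] => destruct b end; simpl; lia.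
Qed.

Lemma cube_color_first_face B n c d : (d < 3)%nat -> cube_coord c d = 0%nat ->
  cube_color B n c <> 0%nat.
Proof.
  destruct c as [[i j] k]. simpl. rewrite brouwer_f_color_of. unfold color_of.
  destruct d as [|[|[|d]]]; intros Hd Hc; try lia; subst; simpl;
    repeat match goal with |- context [if ?b then _ else _] => destruct b end; lia.
Qed.

Lemma cube_color_last_face B n c d : (1 <= n)%nat -> (d < 3)%nat ->
  cube_coord c d = (2 ^ n - 1)%nat -> cube_color B n c <> S d.
Proof.
  intros Hn. pose proof (pow2_sub1_pos n Hn).
  assert (E : (2 ^ n - 1 =? 0)%nat = false) by (apply Nat.eqb_neq; lia).
  destruct c as [[i j] k]. simpl. rewrite brouwer_f_color_of. unfold color_of.
  destruct d as [|[|[|d]]]; intros Hd Hc; try lia; subst; rewrite E, Nat.eqb_refl; simpl;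
    rewrite ?orb_true_r; simpl;
    repeat match goal with |- context [if ?b then _ else _] => destruct b end; lia.
Qed.

Lemma shift_in_unit a u S0 S1 : 0 <= u <= 1 -> 0 < a <= 1/4 -> 0 <= S0 -> 0 <= S1 ->
  S0 + S1 <= 1 -> (u < a -> S0 = 0) -> (1 - a < u -> S1 = 0) ->
  0 <= u + a * (S1 - S0) <= 1.
Proof.
  intros Hu Ha H0 H1 Hs Hlo Hhi.
  destruct (Rlt_dec u a) as [L|L]; [rewrite (Hlo L); nra|].
  destruct (Rlt_dec (1 - a) u) as [L'|L']; [rewrite (Hhi L'); nra|nra].
Qed.

Definition corner : Type := (bool * bool * bool)%type.

Definition corner_cell (cp cq : nat -> nat) (b : bool) (d : nat) : nat := if b then cq d else cp d.

Definition corner_cube (cp cq : nat -> nat) (c : corner) : cube :=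
  let '(bx, by', bz) := c in
  (corner_cell cp cq bx 0, corner_cell cp cq by' 1, corner_cell cp cq bz 2).

Definition corner_weight_of (a : nat -> R) (c : corner) : R :=
  let '(bx, by', bz) := c in corner_weight bx by' bz (a 0%nat) (a 1%nat) (a 2%nat).

Definition color_mass (B : bcircuit) (n : nat) (cp cq : nat -> nat) (a : nat -> R) (q : nat) : R :=
  fsum corners (fun c => corner_weight_of a c * b2R (cube_color B n (corner_cube cp cq c) =? q)%nat).

Lemma corner_weight_of_ge0 a c : 0 <= corner_weight_of a c.
Proof. destruct c as [[? ?] ?]. apply Rmax_l. Qed.

Lemma corner_weights_sum a : (forall d, 0 <= a d <= 1) -> fsum corners (corner_weight_of a) = 1.
Proof. intros Ha. apply corner_weight_sum; apply Ha. Qed.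

Lemma color_mass_range B n cp cq a q : (forall d, 0 <= a d <= 1) ->
  0 <= color_mass B n cp cq a q <= 1.
Proof.
  intros Ha. rewrite <- (corner_weights_sum a Ha). unfold color_mass. split.
  - apply fsum_ge0. intros c. pose proof (corner_weight_of_ge0 a c).
    pose proof (b2R_range (cube_color B n (corner_cube cp cq c) =? q)%nat). nra.
  - apply fsum_le. intros c. pose proof (corner_weight_of_ge0 a c).
    pose proof (b2R_range (cube_color B n (corner_cube cp cq c) =? q)%nat). nra.
Qed.

Lemma color_mass_disjoint B n cp cq a q : (forall d, 0 <= a d <= 1) -> q <> 0%nat ->
  color_mass B n cp cq a q + color_mass B n cp cq a 0 <= 1.
Proof.
  intros Ha Hq. unfold color_mass. rewrite fsum_add, <- (corner_weights_sum a Ha).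
  apply fsum_le. intros c. pose proof (corner_weight_of_ge0 a c).
  destruct (cube_color B n (corner_cube cp cq c) =? q)%nat eqn:E1;
    destruct (cube_color B n (corner_cube cp cq c) =? 0)%nat eqn:E2; simpl; try nra.
  apply Nat.eqb_eq in E1, E2. lia.
Qed.

Lemma color_mass_absent B n cp cq a q :
  (forall c, cube_color B n (corner_cube cp cq c) <> q) -> color_mass B n cp cq a q = 0.
Proof.
  intros H. apply fsum_zero. intros c. specialize (H c). apply Nat.eqb_neq in H.
  rewrite H. simpl. ring.
Qed.

Lemma corner_cube_coord cp cq c d : (d < 3)%nat ->
  exists b, cube_coord (corner_cube cp cq c) d = corner_cell cp cq b d.
Proof.
  destruct c as [[bx by'] bz]. intros Hd.
  destruct d as [|[|[|d]]]; [exists bx|exists by'|exists bz|lia]; reflexivity.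
Qed.

(* Within [alpha] of the face [x_d = 0] all probed cubelets lie on that face,
   so there is no colour-0 mass; near [x_d = 1] there is no colour-[d+1] mass. *)
Lemma displaced_coord_in_unit B n x cp cq a d : (1 <= n)%nat -> inK x -> (d < 3)%nat ->
  probe_cells n (coord x d) (cp d) (cq d) -> (forall d, 0 <= a d <= 1) ->
  0 <= coord x d + alpha n * (color_mass B n cp cq a (S d) - color_mass B n cp cq a 0) <= 1.
Proof.
  intros Hn Hx Hd (_ & _ & _ & _ & Hlo & Hhi & _) Ha.
  apply shift_in_unit; try apply color_mass_range; auto.
  - now apply coord_range.
  - now apply alpha_bounds.
  - rewrite Rplus_comm. now apply color_mass_disjoint.
  - intros L. destruct (Hlo L) as [Hp Hq]. apply color_mass_absent. intros c.
    apply (cube_color_first_face B n _ d); auto.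
    destruct (corner_cube_coord cp cq c d Hd) as [[] ->]; simpl; auto.
  - intros L. destruct (Hhi L) as [Hp Hq]. apply color_mass_absent. intros c.
    apply (cube_color_last_face B n _ d); auto.
    destruct (corner_cube_coord cp cq c d Hd) as [[] ->]; simpl; auto.
Qed.

Lemma pt_eq (a b c a' b' c' : R) : a = a' -> b = b' -> c = c' -> ((a, b, c) : pt) = (a', b', c').
Proof. intros; subst; reflexivity. Qed.

Lemma delta_col_indicators n f : (f <= 3)%nat ->
  delta_col n f = (alpha n * (b2R (f =? 1)%nat - b2R (f =? 0)%nat),
                   alpha n * (b2R (f =? 2)%nat - b2R (f =? 0)%nat),
                   alpha n * (b2R (f =? 3)%nat - b2R (f =? 0)%nat)).
Proof. intros. destruct f as [|[|[|[|]]]]; simpl; try lia; apply pt_eq; ring. Qed.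

Lemma displacement_map {A} B n (W : A -> R) (K : A -> cube) cs :
  let S q := fsum cs (fun c => W c * b2R (cube_color B n (K c) =? q)%nat) in
  displacement B n (map (fun c => (W c, K c)) cs) =
  (alpha n * (S 1%nat - S 0%nat), alpha n * (S 2%nat - S 0%nat), alpha n * (S 3%nat - S 0%nat)).
Proof.
  induction cs as [|c cs IH]; simpl in *.
  - unfold vzero, fsum; simpl. apply pt_eq; ring.
  - rewrite IH, (delta_col_indicators n _ (cube_color_le3 B n (K c))).
    unfold vadd, vscale, fsum, cx, cy, cz; simpl. apply pt_eq; ring.
Qed.

Lemma color_combination_at B n (F : pt -> pt) x cp cq a :
  (forall d, (d < 3)%nat -> probe_cells n (coord x d) (cp d) (cq d)) ->
  (forall d, 0 <= a d <= 1) ->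
  vsub (F x) x =
    (alpha n * (color_mass B n cp cq a 1 - color_mass B n cp cq a 0),
     alpha n * (color_mass B n cp cq a 2 - color_mass B n cp cq a 0),
     alpha n * (color_mass B n cp cq a 3 - color_mass B n cp cq a 0)) ->
  exists l : list (R * cube),
    (forall w c, In (w, c) l ->
       0 <= w /\ cube_in_range n c /\ dist_inf (cube_center n c) x <= / 2 ^ n) /\
    total_weight l = 1 /\ vsub (F x) x = displacement B n l /\
    (forall i j k, x = center n i j k -> forall w c, In (w, c) l -> c = (i, j, k)).
Proof.
  intros Hcells Ha HF.
  destruct (Hcells 0%nat ltac:(lia)) as (Hp0 & Hq0 & Dp0 & Dq0 & _ & _ & Ce0).
  destruct (Hcells 1%nat ltac:(lia)) as (Hp1 & Hq1 & Dp1 & Dq1 & _ & _ & Ce1).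
  destruct (Hcells 2%nat ltac:(lia)) as (Hp2 & Hq2 & Dp2 & Dq2 & _ & _ & Ce2).
  exists (map (fun c => (corner_weight_of a c, corner_cube cp cq c)) corners).
  split; [|split; [|split]].
  - intros w c Hin. apply in_map_iff in Hin as (c' & Heq & _). inversion Heq; subst w c.
    split; [apply corner_weight_of_ge0|].
    destruct c' as [[bx by'] bz]. unfold corner_cube, corner_cell. split.
    + destruct bx, by', bz; repeat split; auto.
    + unfold cube_center, center, dist_inf, cx, cy, cz; simpl.
      apply Rmax_lub; [|apply Rmax_lub]; [destruct bx|destruct by'|destruct bz]; auto.
  - rewrite <- (corner_weights_sum a Ha). unfold total_weight, fsum.
    induction corners; simpl; auto. now rewrite IHl.
  - rewrite HF, displacement_map. reflexivity.
  - intros i j k Hxc w c Hin. apply in_map_iff in Hin as (c' & Heq & _). inversion Heq; subst w c.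
    destruct c' as [[bx by'] bz]. unfold corner_cube, corner_cell.
    destruct (Ce0 i) as [-> ->]; [rewrite Hxc; reflexivity|].
    destruct (Ce1 j) as [-> ->]; [rewrite Hxc; reflexivity|].
    destruct (Ce2 k) as [-> ->]; [rewrite Hxc; reflexivity|].
    destruct bx, by', bz; reflexivity.
Qed.

(* The wires of a coordinate: its value, [1 - mix_weight], and the flags of
   the cells of its two probes. *)
Definition probe_wires : Type := (nat * nat * flag_wires * flag_wires)%type.

Definition pw_coord (pw : probe_wires) : nat := let '(u, _, _, _) := pw in u.
Definition pw_split (pw : probe_wires) : nat := let '(_, om, _, _) := pw in om.
Definition pw_flags (b : bool) (pw : probe_wires) : flag_wires :=
  let '(_, _, flo, fhi) := pw in if b then fhi else flo.

Definition probe_wires_ok (n : nat) (gs : list lgate) (d : nat) (pw : probe_wires) : Prop :=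
  (pw_coord pw < length gs)%nat /\ (pw_split pw < length gs)%nat /\
  (forall b, flag_wires_ok n gs (pw_flags b pw)) /\
  forall x, inK x ->
    gval gs x (pw_coord pw) = coord x d /\
    gval gs x (pw_split pw) = 1 - mix_weight n (coord x d) /\
    (forall c, well_inside n (probe_lo n (coord x d)) c -> cell_flags n gs x (pw_flags false pw) c) /\
    (forall c, well_inside n (probe_hi n (coord x d)) c -> cell_flags n gs x (pw_flags true pw) c).

Lemma probe_wires_ok_prefix n gs gs' d pw : prefix gs gs' -> probe_wires_ok n gs d pw ->
  probe_wires_ok n gs' d pw.
Proof.
  intros Hp (Hu & Hom & Hf & Hv). pose proof (prefix_length _ _ Hp).
  split; [lia|]. split; [lia|]. split; [intros b; eapply flag_wires_ok_prefix; eauto|].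
  intros x Hx. destruct (Hv x Hx) as (V1 & V2 & V3 & V4).
  rewrite !(gval_prefix _ _ x _ Hp) by auto.
  split; [auto|]. split; [auto|].
  split; intros c Hc; eapply cell_flags_prefix; eauto.
Qed.

Definition coord_probe_block (n d : nat) (gs : list lgate) : probe_wires * list lgate :=
  let '(u, om, P, Q, gs1) := coord_block n d gs in
  let '(flo, gs2) := sample_block n P gs1 in
  let '(fhi, gs3) := sample_block n Q gs2 in
  ((u, om, flo, fhi), gs3).

Lemma coord_probe_block_spec n d gs : (1 <= n)%nat -> (d < 3)%nat -> has_consts n gs ->
  wf_gates gs ->
  let '(pw, gs') := coord_probe_block n d gs in
  prefix gs gs' /\ length gs' = (length gs + 14 * n + 28)%nat /\ wf_gates gs' /\
  probe_wires_ok n gs' d pw.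
Proof.
  intros Hn Hd Hc Hw. unfold coord_probe_block.
  pose proof (coord_block_spec n d gs Hn Hd Hc Hw) as CB.
  destruct (coord_block n d gs) as [[[[u om] P] Q] gs1].
  destruct CB as (Hp1 & Hl1 & Hw1 & Hu & Hom & HP & HQ & V1).
  assert (Hc1 : has_consts n gs1) by (eapply has_consts_prefix; eauto).
  pose proof (sample_block_spec n P gs1 Hn Hc1 Hw1 HP) as SB.
  destruct (sample_block n P gs1) as [flo gs2].
  destruct SB as (Hp2 & Hl2 & Hw2 & Hflo & V2).
  assert (Hc2 : has_consts n gs2) by (eapply has_consts_prefix; eauto).
  pose proof (prefix_length _ _ Hp2).
  pose proof (sample_block_spec n Q gs2 Hn Hc2 Hw2 ltac:(lia)) as SB.
  destruct (sample_block n Q gs2) as [fhi gs3].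
  destruct SB as (Hp3 & Hl3 & Hw3 & Hfhi & V3).
  pose proof (prefix_length _ _ Hp3).
  split; [eapply prefix_trans; [exact Hp1|]; eapply prefix_trans; eauto|].
  split; [lia|]. split; [auto|].
  split; [simpl; lia|]. split; [simpl; lia|].
  split; [intros []; simpl; eauto using flag_wires_ok_prefix|].
  intros x Hx. destruct (V1 x Hx) as (Vu & Vom & VP & VQ). simpl.
  rewrite !(gval_prefix gs2 gs3 x) by (auto; lia).
  rewrite !(gval_prefix gs1 gs2 x) by (auto; lia).
  split; [auto|]. split; [auto|]. split; intros c Hin.
  - eapply cell_flags_prefix; eauto. apply V2; auto. now rewrite VP.
  - apply V3; auto. rewrite (gval_prefix gs1 gs2 x) by (auto; lia). now rewrite VQ.
Qed.

Definition probe_stage (n : nat) : (nat -> probe_wires) * list lgate :=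
  let '(pw0, g1) := coord_probe_block n 0 (const_gates n) in
  let '(pw1, g2) := coord_probe_block n 1 g1 in
  let '(pw2, g3) := coord_probe_block n 2 g2 in
  (fun d => match d with 0%nat => pw0 | 1%nat => pw1 | _ => pw2 end, g3).

Lemma probe_stage_spec n : (1 <= n)%nat ->
  let '(pw, gs) := probe_stage n in
  has_consts n gs /\ wf_gates gs /\ length gs = (42 * n + 94)%nat /\
  forall d, (d < 3)%nat -> probe_wires_ok n gs d (pw d).
Proof.
  intros Hn. unfold probe_stage.
  pose proof (prefix_refl (const_gates n)) as Hc0.
  pose proof (coord_probe_block_spec n 0 _ Hn ltac:(lia) Hc0 (const_gates_wf n)) as C0.
  destruct (coord_probe_block n 0 (const_gates n)) as [pw0 g1].
  destruct C0 as (Hp1 & Hl1 & Hw1 & Ok0).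
  pose proof (has_consts_prefix _ _ _ Hc0 Hp1) as Hc1.
  pose proof (coord_probe_block_spec n 1 g1 Hn ltac:(lia) Hc1 Hw1) as C1.
  destruct (coord_probe_block n 1 g1) as [pw1 g2].
  destruct C1 as (Hp2 & Hl2 & Hw2 & Ok1).
  pose proof (has_consts_prefix _ _ _ Hc1 Hp2) as Hc2.
  pose proof (coord_probe_block_spec n 2 g2 Hn ltac:(lia) Hc2 Hw2) as C2.
  destruct (coord_probe_block n 2 g2) as [pw2 g3].
  destruct C2 as (Hp3 & Hl3 & Hw3 & Ok2).
  split; [eapply has_consts_prefix; eauto|]. split; [auto|].
  split; [simpl in Hl1; lia|].
  intros [|[|[|d]]] Hd; try lia; simpl.
  - apply (probe_wires_ok_prefix n g1); [eapply prefix_trans|]; eauto.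
  - now apply (probe_wires_ok_prefix n g2).
  - exact Ok2.
Qed.

(* Coordinate [d] of corner [b] ranges over [[0, a]] or [[a, 1]], where the
   split point [a = 1 - mix_weight] is carried by [pw_split]. *)
Definition lo_wire (b : bool) (pw : probe_wires) : nat := if b then pw_split pw else c_zero.
Definition hi_wire (b : bool) (pw : probe_wires) : nat := if b then c_one else pw_split pw.

Definition split_values (gs : list lgate) (x : pt) (pw : nat -> probe_wires) (d : nat) : R :=
  gval gs x (pw_split (pw d)).

Definition probe_wires_fit (n : nat) (gs : list lgate) (pw : nat -> probe_wires) : Prop :=
  forall d, (d < 3)%nat ->
    (pw_split (pw d) < length gs)%nat /\ forall b, flag_wires_ok n gs (pw_flags b (pw d)).

Definition corner_flags (n : nat) (gs : list lgate) (x : pt) (pw : nat -> probe_wires)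
  (cp cq : nat -> nat) : Prop :=
  forall d b, (d < 3)%nat ->
    corner_lo b (split_values gs x pw d) < corner_hi b (split_values gs x pw d) ->
    cell_flags n gs x (pw_flags b (pw d)) (corner_cell cp cq b d).

Lemma probe_wires_fit_prefix n gs gs' pw : prefix gs gs' -> probe_wires_fit n gs pw ->
  probe_wires_fit n gs' pw.
Proof.
  intros Hp Hpw d Hd. pose proof (prefix_length _ _ Hp). destruct (Hpw d Hd) as [Hs Hf].
  split; [lia|]. intros b. eapply flag_wires_ok_prefix; eauto.
Qed.

Lemma split_values_prefix n gs gs' x pw d : prefix gs gs' -> probe_wires_fit n gs pw ->
  (d < 3)%nat -> split_values gs' x pw d = split_values gs x pw d.
Proof. intros Hp Hpw Hd. unfold split_values. apply gval_prefix; auto. now apply Hpw. Qed.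

Lemma corner_flags_prefix n gs gs' x pw cp cq : prefix gs gs' -> probe_wires_fit n gs pw ->
  corner_flags n gs x pw cp cq -> corner_flags n gs' x pw cp cq.
Proof.
  intros Hp Hpw Hf d b Hd Hlt. rewrite (split_values_prefix n gs gs') in Hlt by auto.
  eapply cell_flags_prefix; eauto. now apply Hpw.
Qed.

Definition probe_corner_block (n : nat) (B : bcircuit) (pw : nat -> probe_wires) (c : corner)
  (gs : list lgate) : nat * list lgate :=
  let '(bx, by', bz) := c in
  corner_block n B
    (lo_wire bx (pw 0%nat)) (hi_wire bx (pw 0%nat)) (lo_wire by' (pw 1%nat))
    (hi_wire by' (pw 1%nat)) (lo_wire bz (pw 2%nat)) (hi_wire bz (pw 2%nat))
    (pw_flags bx (pw 0%nat)) (pw_flags by' (pw 1%nat)) (pw_flags bz (pw 2%nat)) gs.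

Lemma interval_weight_corner n gs x pw bx by' bz : (1 <= n)%nat -> has_consts n gs ->
  interval_weight gs x (lo_wire bx (pw 0%nat)) (hi_wire bx (pw 0%nat)) (lo_wire by' (pw 1%nat))
    (hi_wire by' (pw 1%nat)) (lo_wire bz (pw 2%nat)) (hi_wire bz (pw 2%nat)) =
  corner_weight_of (split_values gs x pw) (bx, by', bz).
Proof.
  intros Hn Hc. destruct (const_gates_val n gs x Hn Hc) as (Hone & Hzero & _).
  unfold interval_weight, corner_weight_of, corner_weight, corner_lo, corner_hi, lo_wire, hi_wire,
    split_values.
  destruct bx, by', bz; rewrite ?Hone, ?Hzero; reflexivity.
Qed.

Lemma probe_corner_block_spec n B pw c gs : (1 <= n)%nat -> bcircuit_wf (3 * n) B ->
  has_consts n gs -> wf_gates gs -> probe_wires_fit n gs pw ->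
  let '(w, gs') := probe_corner_block n B pw c gs in
  prefix gs gs' /\ length gs' = (length gs + length (bgates B) + 37)%nat /\ wf_gates gs' /\
  (w + 3 < length gs')%nat /\
  forall x, inK x -> forall cp cq, corner_flags n gs x pw cp cq ->
    forall q, (q < 4)%nat ->
      gval gs' x (w + q) = corner_weight_of (split_values gs x pw) c *
                           b2R (cube_color B n (corner_cube cp cq c) =? q)%nat.
Proof.
  intros Hn HB Hc Hw Hpw. destruct c as [[bx by'] bz]. unfold probe_corner_block.
  pose proof (has_consts_length n gs Hc).
  destruct (Hpw 0%nat ltac:(lia)) as [Hs0 Hf0], (Hpw 1%nat ltac:(lia)) as [Hs1 Hf1],
    (Hpw 2%nat ltac:(lia)) as [Hs2 Hf2].
  pose proof (corner_block_spec n B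
    (lo_wire bx (pw 0%nat)) (hi_wire bx (pw 0%nat)) (lo_wire by' (pw 1%nat))
    (hi_wire by' (pw 1%nat)) (lo_wire bz (pw 2%nat)) (hi_wire bz (pw 2%nat))
    (pw_flags bx (pw 0%nat)) (pw_flags by' (pw 1%nat)) (pw_flags bz (pw 2%nat)) gs
    Hn HB Hc Hw ltac:(unfold lo_wire, hi_wire; destruct bx, by', bz; repeat constructor; lia)
    (Hf0 bx) (Hf1 by') (Hf2 bz)) as CB.
  destruct (corner_block n B _ _ _ _ _ _ _ _ _ gs) as [w gs1].
  destruct CB as (Hp1 & Hl1 & Hw1 & Hw3 & V1).
  do 4 (split; [auto|]).
  intros x Hx cp cq Hflags q Hq.
  rewrite (V1 x Hx (corner_cell cp cq bx 0) (corner_cell cp cq by' 1) (corner_cell cp cq bz 2));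
    auto; rewrite (interval_weight_corner n) by auto; [reflexivity|].
  intros Hpos. apply corner_weight_pos in Hpos as (P0 & P1 & P2).
  split; [|split]; [apply (Hflags 0%nat bx)|apply (Hflags 1%nat by')|apply (Hflags 2%nat bz)];
    auto; lia.
Qed.

Fixpoint corners_block (n : nat) (B : bcircuit) (pw : nat -> probe_wires) (cs : list corner)
  (gs : list lgate) : list nat * list lgate :=
  match cs with
  | [] => ([], gs)
  | c :: cs' =>
      let '(w, gs1) := probe_corner_block n B pw c gs in
      let '(ws, gs2) := corners_block n B pw cs' gs1 in
      (w :: ws, gs2)
  end.

Lemma corners_block_spec n B pw cs gs : (1 <= n)%nat -> bcircuit_wf (3 * n) B ->
  has_consts n gs -> wf_gates gs -> probe_wires_fit n gs pw ->
  let '(ws, gs') := corners_block n B pw cs gs in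
  prefix gs gs' /\ length gs' = (length gs + length cs * (length (bgates B) + 37))%nat /\
  wf_gates gs' /\ length ws = length cs /\ Forall (fun w => w + 3 < length gs')%nat ws /\
  forall x, inK x -> forall cp cq, corner_flags n gs x pw cp cq ->
    Forall2 (fun c w => forall q, (q < 4)%nat ->
      gval gs' x (w + q) = corner_weight_of (split_values gs x pw) c *
                           b2R (cube_color B n (corner_cube cp cq c) =? q)%nat) cs ws.
Proof.
  intros Hn HB. revert gs.
  induction cs as [|c cs IH]; intros gs Hc Hw Hpw; simpl.
  - split; [apply prefix_refl|]. split; [lia|]. split; [auto|]. split; [auto|].
    split; [constructor|]. intros; constructor.
  - pose proof (probe_corner_block_spec n B pw c gs Hn HB Hc Hw Hpw) as CB.
    destruct (probe_corner_block n B pw c gs) as [w gs1].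
    destruct CB as (Hp1 & Hl1 & Hw1 & Hw3 & V1).
    specialize (IH gs1 (has_consts_prefix _ _ _ Hc Hp1) Hw1 (probe_wires_fit_prefix _ _ _ _ Hp1 Hpw)).
    destruct (corners_block n B pw cs gs1) as [ws gs2].
    destruct IH as (Hp2 & Hl2 & Hw2 & Hlen & Hws & V2).
    pose proof (prefix_length _ _ Hp2).
    split; [eapply prefix_trans; eauto|]. split; [simpl; lia|]. split; [auto|].
    split; [simpl; lia|]. split; [constructor; auto; lia|].
    intros x Hx cp cq Hflags. constructor.
    + intros q Hq. rewrite (gval_prefix _ _ x _ Hp2) by lia. auto.
    + eapply Forall2_impl; [|apply (V2 x Hx cp cq); eapply corner_flags_prefix; eauto].
      intros c' w' Hc' q Hq. rewrite Hc' by auto. f_equal. destruct c' as [[? ?] ?].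
      unfold corner_weight_of. rewrite !(split_values_prefix n gs gs1) by (auto; lia). reflexivity.
Qed.

Lemma choice3 (P : nat -> nat -> nat -> Prop) :
  (forall d, (d < 3)%nat -> exists p q, P d p q) ->
  exists cp cq : nat -> nat, forall d, (d < 3)%nat -> P d (cp d) (cq d).
Proof.
  intros H.
  destruct (H 0%nat ltac:(lia)) as (p0 & q0 & H0), (H 1%nat ltac:(lia)) as (p1 & q1 & H1),
    (H 2%nat ltac:(lia)) as (p2 & q2 & H2).
  exists (fun d => match d with 0%nat => p0 | 1%nat => p1 | _ => p2 end),
         (fun d => match d with 0%nat => q0 | 1%nat => q1 | _ => q2 end).
  intros [|[|[|d]]] Hd; auto; lia.
Qed.

Lemma probe_cells_at n gs pw x : (1 <= n)%nat -> inK x ->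
  (forall d, (d < 3)%nat -> probe_wires_ok n gs d (pw d)) ->
  exists cp cq : nat -> nat,
    (forall d, (d < 3)%nat -> probe_cells n (coord x d) (cp d) (cq d)) /\
    corner_flags n gs x pw cp cq.
Proof.
  intros Hn Hx Hpw.
  destruct (choice3 (fun d p q => probe_cells n (coord x d) p q /\
    (mix_weight n (coord x d) < 1 -> well_inside n (probe_lo n (coord x d)) p) /\
    (0 < mix_weight n (coord x d) -> well_inside n (probe_hi n (coord x d)) q)))
    as (cp & cq & Hcells).
  { intros d Hd. apply coordinate_probe_cells; auto using coord_range. }
  exists cp, cq. split; [intros d Hd; apply Hcells; auto|].
  intros d b Hd Hlt. destruct (Hcells d Hd) as (_ & Hlo & Hhi).
  destruct (Hpw d Hd) as (_ & _ & _ & V). destruct (V x Hx) as (_ & Vs & Vlo & Vhi).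
  unfold split_values in Hlt. rewrite Vs in Hlt.
  destruct b; simpl in Hlt |- *; [apply Vhi, Hhi|apply Vlo, Hlo]; lra.
Qed.

Definition mass_block (q : nat) (ws : list nat) (gs : list lgate) : nat * list lgate :=
  sum_block c_zero (map (fun w => (w + q)%nat) ws) gs.

Lemma gsum_shifted {A} gs x q (cs : list A) ws V :
  Forall2 (fun c w => gval gs x (w + q) = V c) cs ws ->
  gsum gs x (map (fun w => (w + q)%nat) ws) = fsum cs V.
Proof. intros HF. induction HF; unfold gsum, fsum in *; simpl; auto. rewrite IHHF. congruence. Qed.

Lemma mass_block_spec {A} n q ws gs : (1 <= n)%nat -> has_consts n gs -> wf_gates gs ->
  (q < 4)%nat -> Forall (fun w => w + 3 < length gs)%nat ws ->
  let '(s, gs') := mass_block q ws gs in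
  prefix gs gs' /\ length gs' = (length gs + length ws)%nat /\ wf_gates gs' /\
  (s < length gs')%nat /\
  forall x (cs : list A) V, inK x -> Forall2 (fun c w => gval gs x (w + q) = V c) cs ws ->
    fsum cs V <= 1 -> gval gs' x s = fsum cs V.
Proof.
  intros Hn Hc Hw Hq Hws. unfold mass_block. pose proof (has_consts_length n gs Hc).
  pose proof (sum_block_spec (map (fun w => (w + q)%nat) ws) c_zero gs Hw ltac:(lia)
    ltac:(rewrite Forall_map; eapply Forall_impl; [|exact Hws]; simpl; intros; lia)) as SB.
  destruct (sum_block c_zero _ gs) as [s gs'].
  destruct SB as (Hp & Hl & Hw' & Hs & V). rewrite length_map in Hl.
  split; [auto|]. split; [auto|]. split; [auto|]. split; [auto|].
  intros x cs Vc Hx HF Hle.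
  destruct (const_gates_val n gs x Hn Hc) as (_ & Hzero & _).
  specialize (V x Hx). rewrite (gsum_shifted gs x q cs ws Vc HF), Hzero in V.
  rewrite V; lra.
Qed.

Lemma Forall2_gval_prefix {A} gs gs' x q (cs : list A) ws V : prefix gs gs' ->
  (q < 4)%nat -> Forall (fun w => w + 3 < length gs)%nat ws ->
  Forall2 (fun c w => gval gs x (w + q) = V c) cs ws ->
  Forall2 (fun c w => gval gs' x (w + q) = V c) cs ws.
Proof.
  intros Hp Hq Hws HF. induction HF; constructor; inversion Hws; subst; auto.
  rewrite (gval_prefix _ _ x _ Hp) by lia. auto.
Qed.

Definition masses_block (ws : list nat) (gs : list lgate) : nat * nat * nat * nat * list lgate :=
  let '(s0, g1) := mass_block 0 ws gs in
  let '(s1, g2) := mass_block 1 ws g1 in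
  let '(s2, g3) := mass_block 2 ws g2 in
  let '(s3, g4) := mass_block 3 ws g3 in
  (s0, s1, s2, s3, g4).

Lemma masses_block_spec {A} n ws gs : (1 <= n)%nat -> has_consts n gs -> wf_gates gs ->
  Forall (fun w => w + 3 < length gs)%nat ws ->
  let '(s0, s1, s2, s3, gs') := masses_block ws gs in
  prefix gs gs' /\ length gs' = (length gs + 4 * length ws)%nat /\ wf_gates gs' /\
  Forall (fun s => s < length gs')%nat [s0; s1; s2; s3] /\
  forall x (cs : list A) (V : nat -> A -> R), inK x ->
    (forall q, (q < 4)%nat -> Forall2 (fun c w => gval gs x (w + q) = V q c) cs ws) ->
    (forall q, (q < 4)%nat -> fsum cs (V q) <= 1) ->
    gval gs' x s0 = fsum cs (V 0%nat) /\ gval gs' x s1 = fsum cs (V 1%nat) /\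
    gval gs' x s2 = fsum cs (V 2%nat) /\ gval gs' x s3 = fsum cs (V 3%nat).
Proof.
  intros Hn Hc Hw Hws. unfold masses_block.
  assert (Hstep : forall q g, (q < 4)%nat -> has_consts n g -> wf_gates g -> prefix gs g ->
    let '(s, g') := mass_block q ws g in
    prefix g g' /\ length g' = (length g + length ws)%nat /\ wf_gates g' /\ (s < length g')%nat /\
    forall x (cs : list A) V, inK x -> Forall2 (fun c w => gval gs x (w + q) = V c) cs ws ->
      fsum cs V <= 1 -> gval g' x s = fsum cs V).
  { intros q g Hq Hcg Hwg Hpg. pose proof (prefix_length _ _ Hpg).
    pose proof (mass_block_spec (A := A) n q ws g Hn Hcg Hwg Hq
      ltac:(eapply Forall_impl; [|exact Hws]; simpl; intros; lia)) as MB.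
    destruct (mass_block q ws g) as [s g']. destruct MB as (? & ? & ? & ? & V).
    do 4 (split; [auto|]). intros. apply V; auto. eapply Forall2_gval_prefix; eauto. }
  pose proof (Hstep 0%nat gs ltac:(lia) Hc Hw (prefix_refl gs)) as M0.
  destruct (mass_block 0 ws gs) as [s0 g1]. destruct M0 as (P1 & L1 & W1 & S0 & V0).
  pose proof (Hstep 1%nat g1 ltac:(lia) (has_consts_prefix _ _ _ Hc P1) W1 P1) as M1.
  destruct (mass_block 1 ws g1) as [s1 g2]. destruct M1 as (P2 & L2 & W2 & S1 & V1).
  assert (P02 : prefix gs g2) by (eapply prefix_trans; eauto).
  pose proof (Hstep 2%nat g2 ltac:(lia) (has_consts_prefix _ _ _ Hc P02) W2 P02) as M2.
  destruct (mass_block 2 ws g2) as [s2 g3]. destruct M2 as (P3 & L3 & W3 & S2 & V2).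
  assert (P03 : prefix gs g3) by (eapply prefix_trans; eauto).
  pose proof (Hstep 3%nat g3 ltac:(lia) (has_consts_prefix _ _ _ Hc P03) W3 P03) as M3.
  destruct (mass_block 3 ws g3) as [s3 g4]. destruct M3 as (P4 & L4 & W4 & S3 & V3).
  pose proof (prefix_length _ _ P2); pose proof (prefix_length _ _ P3);
  pose proof (prefix_length _ _ P4).
  split; [eapply prefix_trans; eauto|]. split; [lia|]. split; [auto|].
  split; [repeat constructor; lia|].
  intros x cs V Hx HF Hle.
  assert (G2 : forall p, (p < length g1)%nat -> gval g2 x p = gval g1 x p)
    by (intros; now apply gval_prefix).
  assert (G3 : forall p, (p < length g2)%nat -> gval g3 x p = gval g2 x p)
    by (intros; now apply gval_prefix).
  assert (G4 : forall p, (p < length g3)%nat -> gval g4 x p = gval g3 x p)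
    by (intros; now apply gval_prefix).
  split; [rewrite G4, G3, G2 by lia; apply V0; [auto|apply HF; lia|apply Hle; lia]|].
  split; [rewrite G4, G3 by lia; apply V1; [auto|apply HF; lia|apply Hle; lia]|].
  split; [rewrite G4 by lia; apply V2; [auto|apply HF; lia|apply Hle; lia]|].
  apply V3; [auto|apply HF; lia|apply Hle; lia].
Qed.

Definition outputs_block (n : nat) (u : nat -> nat) (s0 s1 s2 s3 : nat) (gs : list lgate)
  : nat * nat * nat * list lgate :=
  let '(o0, g1) := output_block n (u 0%nat) s1 s0 gs in
  let '(o1, g2) := output_block n (u 1%nat) s2 s0 g1 in
  let '(o2, g3) := output_block n (u 2%nat) s3 s0 g2 in
  (o0, o1, o2, g3).

Lemma outputs_block_spec n u s0 s1 s2 s3 gs : (1 <= n)%nat -> has_consts n gs -> wf_gates gs ->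
  (forall d, (d < 3)%nat -> (u d < length gs)%nat) ->
  Forall (fun s => s < length gs)%nat [s0; s1; s2; s3] ->
  let '(o0, o1, o2, gs') := outputs_block n u s0 s1 s2 s3 gs in
  length gs' = (length gs + 24)%nat /\ wf_gates gs' /\
  Forall (fun o => o < length gs')%nat [o0; o1; o2] /\
  forall x, inK x ->
    let v d s := gval gs x (u d) + alpha n * (gval gs x s - gval gs x s0) in
    0 <= v 0%nat s1 <= 1 -> 0 <= v 1%nat s2 <= 1 -> 0 <= v 2%nat s3 <= 1 ->
    gval gs' x o0 = v 0%nat s1 /\ gval gs' x o1 = v 1%nat s2 /\ gval gs' x o2 = v 2%nat s3.
Proof.
  intros Hn Hc Hw Hu Hs. unfold outputs_block.
  rewrite !Forall_cons_iff in Hs. destruct Hs as (H0 & H1 & H2 & H3 & _).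
  pose proof (Hu 0%nat ltac:(lia)); pose proof (Hu 1%nat ltac:(lia)); pose proof (Hu 2%nat ltac:(lia)).
  pose proof (output_block_spec n (u 0%nat) s1 s0 gs Hn Hc Hw ltac:(lia) H1 H0) as O0.
  destruct (output_block n (u 0%nat) s1 s0 gs) as [o0 g1]. destruct O0 as (P1 & L1 & W1 & R0 & V0).
  pose proof (has_consts_prefix _ _ _ Hc P1) as Hc1.
  pose proof (output_block_spec n (u 1%nat) s2 s0 g1 Hn Hc1 W1 ltac:(lia) ltac:(lia) ltac:(lia))
    as O1.
  destruct (output_block n (u 1%nat) s2 s0 g1) as [o1 g2]. destruct O1 as (P2 & L2 & W2 & R1 & V1).
  pose proof (has_consts_prefix _ _ _ Hc1 P2) as Hc2.
  pose proof (output_block_spec n (u 2%nat) s3 s0 g2 Hn Hc2 W2 ltac:(lia) ltac:(lia) ltac:(lia))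
    as O2.
  destruct (output_block n (u 2%nat) s3 s0 g2) as [o2 g3]. destruct O2 as (P3 & L3 & W3 & R2 & V2).
  split; [lia|]. split; [auto|]. split; [repeat constructor; lia|].
  intros x Hx B0 B1 B2.
  assert (G2 : forall p, (p < length gs)%nat -> gval g2 x p = gval gs x p)
    by (intros; apply gval_prefix; [eapply prefix_trans|]; eauto; lia).
  assert (G1 : forall p, (p < length gs)%nat -> gval g1 x p = gval gs x p)
    by (intros; now apply gval_prefix).
  split; [|split].
  - rewrite (gval_prefix g1 g3 x) by (eauto using prefix_trans; lia). now apply V0.
  - rewrite (gval_prefix g2 g3 x) by (auto; lia). rewrite V1, !G1 by (auto; rewrite ?G1; auto; lia).
    reflexivity.
  - rewrite V2, !G2 by (auto; rewrite ?G2; auto; lia). reflexivity.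
Qed.

Definition color_mass_stage (n : nat) (B : bcircuit)
  : (nat -> probe_wires) * nat * nat * nat * nat * list lgate :=
  let '(pw, g1) := probe_stage n in
  let '(ws, g2) := corners_block n B pw corners g1 in
  let '(s0, s1, s2, s3, g3) := masses_block ws g2 in
  (pw, s0, s1, s2, s3, g3).

Lemma color_mass_stage_spec n B : (1 <= n)%nat -> bcircuit_wf (3 * n) B ->
  let '(pw, s0, s1, s2, s3, gs) := color_mass_stage n B in
  has_consts n gs /\ wf_gates gs /\ length gs = (42 * n + 8 * length (bgates B) + 422)%nat /\
  (forall d, (d < 3)%nat -> (pw_coord (pw d) < length gs)%nat) /\
  Forall (fun s => s < length gs)%nat [s0; s1; s2; s3] /\
  forall x, inK x -> exists cp cq a,
    (forall d, (d < 3)%nat -> probe_cells n (coord x d) (cp d) (cq d)) /\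
    (forall d, 0 <= a d <= 1) /\
    (forall d, (d < 3)%nat -> gval gs x (pw_coord (pw d)) = coord x d) /\
    gval gs x s0 = color_mass B n cp cq a 0 /\ gval gs x s1 = color_mass B n cp cq a 1 /\
    gval gs x s2 = color_mass B n cp cq a 2 /\ gval gs x s3 = color_mass B n cp cq a 3.
Proof.
  intros Hn HB. unfold color_mass_stage.
  pose proof (probe_stage_spec n Hn) as PS. destruct (probe_stage n) as [pw g1].
  destruct PS as (Hc1 & Hw1 & Hl1 & Hpw).
  pose proof (corners_block_spec n B pw corners g1 Hn HB Hc1 Hw1
    ltac:(intros d Hd; destruct (Hpw d Hd) as (_ & ? & ? & _); auto)) as CB.
  destruct (corners_block n B pw corners g1) as [ws g2].
  destruct CB as (Hp2 & Hl2 & Hw2 & Hlen & Hws & Vc).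
  pose proof (has_consts_prefix _ _ _ Hc1 Hp2) as Hc2.
  pose proof (masses_block_spec (A := corner) n ws g2 Hn Hc2 Hw2 Hws) as MB.
  destruct (masses_block ws g2) as [[[[s0 s1] s2] s3] g3].
  destruct MB as (Hp3 & Hl3 & Hw3 & Hs & Vm).
  assert (Hp13 : prefix g1 g3) by (eapply prefix_trans; eauto).
  pose proof (prefix_length _ _ Hp13).
  split; [eapply has_consts_prefix; eauto|]. split; [auto|].
  split; [simpl in Hlen, Hl2; lia|].
  split; [intros d Hd; destruct (Hpw d Hd) as (? & _); lia|]. split; [auto|].
  intros x Hx.
  destruct (probe_cells_at n g1 pw x Hn Hx Hpw) as (cp & cq & Hcells & Hflags).
  exists cp, cq, (split_values g1 x pw).
  split; [auto|]. split; [intros; apply gval_range; auto|].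
  split; [intros d Hd; destruct (Hpw d Hd) as (Hu & _ & _ & V);
          rewrite (gval_prefix g1 g3 x) by auto; now apply V|].
  apply (Vm x corners (fun q c => corner_weight_of (split_values g1 x pw) c *
                                  b2R (cube_color B n (corner_cube cp cq c) =? q)%nat) Hx).
  - intros q Hq. eapply Forall2_impl; [|exact (Vc x Hx cp cq Hflags)]. simpl. auto.
  - intros q Hq. apply color_mass_range. intros; apply gval_range; auto.
Qed.

Definition brouwer_circuit (n : nat) (B : bcircuit) : list lgate * nat * nat * nat :=
  let '(pw, s0, s1, s2, s3, g1) := color_mass_stage n B in
  let '(o0, o1, o2, g2) := outputs_block n (fun d => pw_coord (pw d)) s0 s1 s2 s3 g1 in
  (g2, o0, o1, o2).

Lemma brouwer_circuit_correct n B : (1 <= n)%nat -> bcircuit_wf (3 * n) B ->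
  let '(gs, o0, o1, o2) := brouwer_circuit n B in
  wf_gates gs /\ Forall (fun o => o < length gs)%nat [o0; o1; o2] /\
  (length gs <= 1000 * (n + length (bgates B)))%nat /\
  color_combination B n (circuit_fun gs o0 o1 o2).
Proof.
  intros Hn HB. unfold brouwer_circuit.
  pose proof (color_mass_stage_spec n B Hn HB) as CM.
  destruct (color_mass_stage n B) as [[[[[pw s0] s1] s2] s3] g1].
  destruct CM as (Hc1 & Hw1 & Hl1 & Hu & Hs & V1).
  pose proof (outputs_block_spec n (fun d => pw_coord (pw d)) s0 s1 s2 s3 g1 Hn Hc1 Hw1 Hu Hs)
    as OB.
  destruct (outputs_block n _ s0 s1 s2 s3 g1) as [[[o0 o1] o2] g2].
  destruct OB as (Hl2 & Hw2 & Ho & Vo).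
  split; [auto|]. split; [auto|]. split; [lia|].
  intros x Hx. destruct (V1 x Hx) as (cp & cq & a & Hcells & Ha & Vu & M0 & M1 & M2 & M3).
  assert (Hrange : forall d, (d < 3)%nat -> 0 <= coord x d + alpha n *
            (color_mass B n cp cq a (S d) - color_mass B n cp cq a 0) <= 1)
    by (intros; apply displaced_coord_in_unit; auto).
  destruct (Vo x Hx) as (O0 & O1 & O2); cbv beta;
    rewrite ?M0, ?M1, ?M2, ?M3, ?Vu by lia; try (apply Hrange; lia).
  rewrite M0, M1, (Vu 0%nat) in O0 by lia. rewrite M0, M2, (Vu 1%nat) in O1 by lia.
  rewrite M0, M3, (Vu 2%nat) in O2 by lia.
  apply (color_combination_at B n _ x cp cq a); auto.
  unfold circuit_fun, vsub. rewrite O0, O1, O2. apply pt_eq; cbn [cx cy cz coord fst snd]; ring.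
Qed.

Theorem theorem2 :
  exists a b : nat,
    forall (n : nat) (B : bcircuit),
      (1 <= n)%nat ->
      bcircuit_wf (3 * n) B ->
      exists (C : lcircuit) (F : pt -> pt),
        lcircuit_wf C /\
        (length (lgates C) <= a * (n + length (bgates B)) ^ b)%nat /\
        (forall x, inK x -> inK (F x)) /\
        continuous_on_K F /\
        lcomputes C F /\
        implements B n F.
Proof.
  exists 1000%nat, 1%nat. intros n B Hn HB.
  pose proof (brouwer_circuit_correct n B Hn HB) as BC.
  destruct (brouwer_circuit n B) as [[[gs o0] o1] o2].
  destruct BC as (Hw & Ho & Hlen & Hcomb).
  rewrite !Forall_cons_iff in Ho. destruct Ho as (H0 & H1 & H2 & _).
  destruct (circuit_fun_props gs o0 o1 o2 Hw H0 H1 H2) as (Hwf & HK & Hcont & Hcomp).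
  exists (mk_lcircuit gs o0 o1 o2), (circuit_fun gs o0 o1 o2).
  split; [exact Hwf|]. split; [rewrite Nat.pow_1_r; exact Hlen|].
  split; [exact HK|]. split; [exact Hcont|]. split; [exact Hcomp|].
  now apply implements_of_color_combination.
Qed.
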